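(* Let $a<0$, $\kappa>0$, $\alpha,\beta\ge0$, and let $U=[a,0-]\cup\{0+\}$. Let $A$ be the operator in $C(U)$ whose domain consists of those $f\in C(U)$ which, restricted to $[a,0-]$, are twice continuously differentiable and satisfy \[f'(a)=0,\qquad f'(0-)=\beta\,(f(0+)-f(0-)),\] given by $Af(0+)=-\alpha f(0+)+\alpha f(0-)$ and $Af(x)=\kappa f''(x)$ for $x\in[a,0-]$. Then $A$ is the generator of a conservative Feller semigroup in $C(U)$.
   Context: $U$ is the disjoint union of the interval $[a,0-]$ and an isolated point $0+$ ($0-$, $0+$ are distinct copies of $0$); $C(U)$ is the space of continuous functions on $U$ with the supremum norm. A conservative Feller semigroup is a strongly continuous semigroup of positive operators on $C(U)$ fixing the constant function $1_U$. *)

From Stdlib Require Import Reals.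
Open Scope R_scope.

Definition Iv (a : R) : Type := {x : R | a <= x <= 0}.

(** U = [a,0-] disjoint union {0+}: [inl x] for x in [a,0-], [inr tt] is 0+. *)
Definition U (a : R) : Type := (Iv a + unit)%type.

Definition zplus (a : R) : U a := inr tt.

Definition cont_Iv (a : R) (h : Iv a -> R) : Prop :=
  forall x : Iv a, forall eps, 0 < eps -> exists d, 0 < d /\
    forall y : Iv a, Rabs (proj1_sig y - proj1_sig x) < d ->
      Rabs (h y - h x) < eps.

(** f belongs to C(U): continuous on [a,0-] (0+ is isolated). *)
Definition CU (a : R) (f : U a -> R) : Prop :=
  cont_Iv a (fun x => f (inl x)).

Definition deriv_Iv (a : R) (h : Iv a -> R) (x : Iv a) (l : R) : Prop :=
  forall eps, 0 < eps -> exists d, 0 < d /\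
    forall y : Iv a, proj1_sig y <> proj1_sig x ->
      Rabs (proj1_sig y - proj1_sig x) < d ->
      Rabs ((h y - h x) / (proj1_sig y - proj1_sig x) - l) < eps.

Definition graphA (a kappa alpha beta : R) (f g : U a -> R) : Prop :=
  CU a f /\
  exists h1 h2 : Iv a -> R,
    (forall x, deriv_Iv a (fun y => f (inl y)) x (h1 x)) /\
    (forall x, deriv_Iv a h1 x (h2 x)) /\
    cont_Iv a h2 /\
    (forall x : Iv a, proj1_sig x = a -> h1 x = 0) /\
    (forall x : Iv a, proj1_sig x = 0 ->
        h1 x = beta * (f (zplus a) - f (inl x))) /\
    (forall x : Iv a, proj1_sig x = 0 ->
        g (zplus a) = - alpha * f (zplus a) + alpha * f (inl x)) /\
    (forall x : Iv a, g (inl x) = kappa * h2 x).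

(** Conservative Feller semigroup on C(U); T t acts on functions U -> R,
    only its action on C(U) matters. Sup-norm statements are written
    out pointwise: ||f|| <= B  iff  forall u, |f u| <= B. *)
Definition conservative_Feller_semigroup (a : R)
    (T : R -> (U a -> R) -> (U a -> R)) : Prop :=
  (forall t f, 0 <= t -> CU a f -> CU a (T t f)) /\
  (forall t f g c d, 0 <= t -> CU a f -> CU a g ->
     forall u, T t (fun v => c * f v + d * g v) u = c * T t f u + d * T t g u) /\
  (forall t, 0 <= t -> exists M, forall f B, CU a f ->
     (forall u, Rabs (f u) <= B) -> forall u, Rabs (T t f u) <= M * B) /\
  (forall f, CU a f -> forall u, T 0 f u = f u) /\
  (forall t s f, 0 <= t -> 0 <= s -> CU a f ->
     forall u, T (t + s) f u = T t (T s f) u) /\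
  (forall f, CU a f -> forall eps, 0 < eps -> exists d, 0 < d /\
     forall t, 0 <= t < d -> forall u, Rabs (T t f u - f u) <= eps) /\
  (forall t f, 0 <= t -> CU a f -> (forall u, 0 <= f u) ->
     forall u, 0 <= T t f u) /\
  (forall t, 0 <= t -> forall u, T t (fun _ => 1) u = 1).

Definition gen_graph (a : R) (T : R -> (U a -> R) -> (U a -> R))
    (f g : U a -> R) : Prop :=
  forall eps, 0 < eps -> exists d, 0 < d /\
    forall h, 0 < h < d -> forall u, Rabs ((T h f u - f u) / h - g u) <= eps.

(* A satisfies the hypotheses of a Hille-Yosida type construction. Its resolvent (l - A)^-1 is
   computed explicitly: on [a,0-] it is the Green operator of kappa f'' = l f - g built from
   cosh/sinh solutions satisfying the Neumann condition at a and the Robin condition at 0- that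
   results from eliminating f(0+); uniqueness follows from the energy identity
   (f f')' = f'^2 + (l/kappa) f^2. The resolvent is positive and fixes 1, so l (l - A)^-1 is a
   Markov contraction, and l (l - A)^-1 g -> g uniformly by a Korovkin argument with the test
   functions 1, P, P^2 for a smoothstep P in the domain, the only extra mass being the
   O(l^(-1/2)) leak from the isolated point 0+. The semigroup is then the uniform limit of the
   implicit Euler scheme (N (N - A)^-1)^floor(N t), which is Cauchy on D(A^2) because the
   resolvents commute and differ from their refinements by O(1/N^2) per step; its generator is
   identified with A through the resolvent. *)

From Stdlib Require Import Reals Lra Lia ZArith FunctionalExtensionality ProofIrrelevance.
From Coquelicot Require Import Coquelicot.
Open Scope R_scope.

Definition norm_le {T : Type} (f : T -> R) (B : R) : Prop := forall u, Rabs (f u) <= B.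

Ltac split_Rabs := repeat match goal with
  | H : Rabs _ <= _ |- _ => apply Rabs_le_between in H; destruct H
  | H : Rabs _ < _ |- _ => apply Rabs_lt_between in H; destruct H
  end.
Ltac Rabs_lra := split_Rabs; try (apply Rabs_le_between; split); lra.

Lemma norm_le_nonneg {T : Type} (f : T -> R) B (u : T) : norm_le f B -> 0 <= B.
Proof. intros H. generalize (Rabs_pos (f u)) (H u). lra. Qed.

Lemma Rabs_div_pos x l B : 0 < l -> Rabs x <= B -> Rabs (/ l * x) <= B / l.
Proof.
  intros Hl Hx. rewrite Rabs_mult, Rabs_inv, (Rabs_right l) by lra.
  unfold Rdiv. rewrite Rmult_comm. apply Rmult_le_compat_r; auto.
  left; apply Rinv_0_lt_compat; lra.
Qed.

Definition nfloor (x : R) : nat := Z.to_nat (Int_part x).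

Lemma nfloor_spec x : 0 <= x -> INR (nfloor x) <= x < INR (nfloor x) + 1.
Proof.
  intros Hx. destruct (base_Int_part x) as [H1 H2].
  assert (Hz : (0 <= Int_part x)%Z).
  { assert (Hm : (-1 < Int_part x)%Z) by (apply lt_IZR; simpl; lra). lia. }
  unfold nfloor. rewrite INR_IZR_INZ, Z2Nat.id by auto. lra.
Qed.

Lemma le_nfloor k x : 0 <= x -> INR k <= x -> (k <= nfloor x)%nat.
Proof.
  intros Hx Hk. destruct (nfloor_spec x Hx) as [_ H].
  assert (Hlt : INR k < INR (S (nfloor x))) by (rewrite S_INR; lra).
  apply INR_lt in Hlt. lia.
Qed.

Lemma nfloor_lt k x : 0 <= x -> x < INR k -> (nfloor x < k)%nat.
Proof. intros Hx Hk. destruct (nfloor_spec x Hx). apply INR_lt. lra. Qed.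

Lemma nfloor_0 : nfloor 0 = 0%nat.
Proof. assert (H : (nfloor 0 < 1)%nat) by (apply nfloor_lt; simpl; lra). lia. Qed.

Lemma nfloor_add x y : 0 <= x -> 0 <= y ->
  exists e, (e <= 1)%nat /\ nfloor (x + y) = (nfloor x + (nfloor y + e))%nat.
Proof.
  intros Hx Hy. destruct (nfloor_spec x Hx), (nfloor_spec y Hy).
  assert (L : (nfloor x + nfloor y <= nfloor (x + y))%nat)
    by (apply le_nfloor; [lra | rewrite plus_INR; lra]).
  assert (U : (nfloor (x + y) < nfloor x + nfloor y + 2)%nat)
    by (apply nfloor_lt; [lra | rewrite !plus_INR; simpl; lra]).
  exists (nfloor (x + y) - (nfloor x + nfloor y))%nat. split; lia.
Qed.

Lemma nfloor_mul_decomp (l t : R) (M : nat) : 0 < l -> 0 <= t -> (0 < M)%nat ->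
  exists r, (r < M)%nat /\ nfloor (INR M * l * t) = (r + M * nfloor (l * t))%nat.
Proof.
  intros Hl Ht HM. assert (Hlt : 0 <= l * t) by (apply Rmult_le_pos; lra).
  assert (Hm : 0 < INR M) by (apply lt_0_INR; auto).
  destruct (nfloor_spec (l * t) Hlt) as [H1 H2].
  assert (Hq : 0 <= INR M * l * t) by (rewrite Rmult_assoc; apply Rmult_le_pos; lra).
  assert (L : (M * nfloor (l * t) <= nfloor (INR M * l * t))%nat).
  { apply le_nfloor; auto. rewrite mult_INR, Rmult_assoc. apply Rmult_le_compat_l; lra. }
  assert (U : (nfloor (INR M * l * t) < M * nfloor (l * t) + M)%nat).
  { apply nfloor_lt; auto. rewrite plus_INR, mult_INR, Rmult_assoc. nra. }
  exists (nfloor (INR M * l * t) - M * nfloor (l * t))%nat. split; lia.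
Qed.

Lemma div_INR_le_eventually C eps : 0 <= C -> 0 < eps ->
  exists N1, (0 < N1)%nat /\ forall N, (N1 <= N)%nat -> C / INR N <= eps.
Proof.
  intros HC He. exists (S (nfloor (C / eps))). split. lia. intros N HN.
  assert (H0 : 0 <= C / eps) by (apply Rmult_le_pos; auto; left; apply Rinv_0_lt_compat; auto).
  destruct (nfloor_spec _ H0) as [_ H2].
  apply le_INR in HN. rewrite S_INR in HN.
  assert (HNp : 0 < INR N) by lra.
  apply (Rmult_le_reg_r (INR N)); auto. unfold Rdiv. rewrite Rmult_assoc, Rinv_l by lra.
  assert (E : C / eps * eps = C) by (field; lra).
  assert (C <= eps * INR N) by (rewrite <- E, Rmult_comm; apply Rmult_le_compat_l; lra).
  lra.
Qed.

Lemma Lim_seq_eq (u : nat -> R) (l : R) :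
  (forall eps, 0 < eps -> exists N, forall n, (N <= n)%nat -> Rabs (u n - l) <= eps) ->
  real (Lim_seq u) = l.
Proof.
  intros H. assert (Hl : is_lim_seq u l).
  { apply is_lim_seq_spec. intros eps. destruct (H (eps/2)) as [N HN].
    destruct eps; simpl; lra.
    exists N. intros n Hn. specialize (HN n Hn). destruct eps; simpl in *; lra. }
  rewrite (is_lim_seq_unique _ _ Hl). reflexivity.
Qed.

Lemma is_lim_seq_Lim_cauchy (s : nat -> R) :
  (forall eps, 0 < eps -> exists N, forall n m, (N <= n)%nat -> (N <= m)%nat ->
     Rabs (s n - s m) <= eps) ->
  is_lim_seq s (real (Lim_seq s)).
Proof.
  intros H.
  assert (Hc : ex_lim_seq_cauchy s).
  { intros eps. destruct (H (eps/2)) as [N HN]. destruct eps; simpl; lra.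
    exists N. intros n m Hn Hm. specialize (HN n m Hn Hm). destruct eps; simpl in *; lra. }
  destruct (proj2 (ex_lim_seq_cauchy_corr s) Hc) as [l Hl].
  rewrite (is_lim_seq_unique _ _ Hl). exact Hl.
Qed.

Lemma is_lim_seq_cauchy_bound (s : nat -> R) (l : R) N eps : is_lim_seq s l ->
  (forall n m, (N <= n)%nat -> (N <= m)%nat -> Rabs (s n - s m) <= eps) ->
  forall n, (N <= n)%nat -> Rabs (s n - l) <= eps.
Proof.
  intros Hl HN n Hn.
  assert (Hl2 : is_lim_seq (fun m => Rabs (s n - s m)) (Rabs (s n - l))).
  { apply (is_lim_seq_abs (fun m => s n - s m) (s n - l)).
    apply is_lim_seq_minus'. apply is_lim_seq_const. exact Hl. }
  apply (is_lim_seq_le_loc (fun m => Rabs (s n - s m)) (fun _ => eps) (Rabs (s n - l)) eps);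
    auto using is_lim_seq_const.
  exists N. intros m Hm. apply HN; auto.
Qed.

Lemma Rabs_lin_le c d x y eps : 0 < eps ->
  Rabs x <= eps / (Rabs c + Rabs d + 1) -> Rabs y <= eps / (Rabs c + Rabs d + 1) ->
  Rabs (c * x + d * y) <= eps.
Proof.
  intros He Hx Hy. set (K := Rabs c + Rabs d + 1) in *.
  assert (HK : 0 < K) by (unfold K; generalize (Rabs_pos c) (Rabs_pos d); lra).
  eapply Rle_trans. apply Rabs_triang. rewrite !Rabs_mult.
  assert (Rabs c * Rabs x <= Rabs c * (eps / K)) by (apply Rmult_le_compat_l; auto; apply Rabs_pos).
  assert (Rabs d * Rabs y <= Rabs d * (eps / K)) by (apply Rmult_le_compat_l; auto; apply Rabs_pos).
  assert (0 < eps / K) by (apply Rdiv_lt_0_compat; lra).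
  assert (eps = K * (eps / K)) by (field; lra).
  assert (K * (eps / K) = Rabs c * (eps / K) + Rabs d * (eps / K) + eps / K) by (unfold K; ring).
  lra.
Qed.

Lemma iter_mul {A : Type} (Y : A -> A) m p x :
  Nat.iter (m * p) Y x = Nat.iter p (Nat.iter m Y) x.
Proof.
  induction p as [|p IH]. rewrite Nat.mul_0_r. reflexivity.
  replace (m * S p)%nat with (m + m * p)%nat by lia. rewrite Nat.iter_add, IH. reflexivity.
Qed.

Lemma small_time_bound C eps t : 0 <= C -> 0 < eps -> 0 <= t < eps / (2 * (C + 1)) ->
  t * C <= eps / 2.
Proof.
  intros HC He [Ht1 Ht2]. apply (Rmult_lt_compat_r (2 * (C + 1))) in Ht2; [|lra].
  replace (eps / (2 * (C + 1)) * (2 * (C + 1))) with eps in Ht2 by (field; lra). nra.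
Qed.

Lemma cosh_pos x : 0 < cosh x.
Proof. unfold cosh. generalize (exp_pos x) (exp_pos (-x)). lra. Qed.

Lemma sinh_pos x : 0 < x -> 0 < sinh x.
Proof. intros H. rewrite <- sinh_0. apply sinh_lt; auto. Qed.

Lemma sinh_nonpos x : x <= 0 -> sinh x <= 0.
Proof.
  intros H. rewrite <- sinh_0. destruct (Req_dec x 0) as [->|]; [lra|]. left; apply sinh_lt; lra.
Qed.

Lemma cosh_le s t : 0 <= s -> s <= t -> cosh s <= cosh t.
Proof.
  intros Hs Hst. unfold cosh. rewrite !exp_Ropp.
  assert (E1 : exp s <= exp t) by (destruct (Req_dec s t) as [->|]; [lra | left; apply exp_increasing; lra]).
  assert (E2 : 1 <= exp s * exp t).
  { rewrite <- exp_plus, <- exp_0. destruct (Req_dec (s + t) 0) as [->|]; [lra|].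
    left; apply exp_increasing; lra. }
  assert (Ps := exp_pos s). assert (Pt := exp_pos t).
  assert (exp t + / exp t - (exp s + / exp s) = (exp t - exp s) * (exp s * exp t - 1) / (exp s * exp t))
    by (field; lra).
  assert (0 <= (exp t - exp s) * (exp s * exp t - 1) / (exp s * exp t)).
  { apply Rmult_le_pos. apply Rmult_le_pos; lra. left; apply Rinv_0_lt_compat; nra. }
  lra.
Qed.

Lemma cosh_le_3sinh z : 1 <= z -> cosh z <= 3 * sinh z.
Proof.
  intros Hz. unfold cosh, sinh. rewrite exp_Ropp.
  assert (H1 : 1 + 2 * z < exp (2 * z)) by (apply exp_ineq1; lra).
  replace (2 * z) with (z + z) in H1 by ring. rewrite exp_plus in H1.
  assert (P := exp_pos z).
  assert (3 * ((exp z - / exp z) / 2) - (exp z + / exp z) / 2 = (exp z * exp z - 2) / exp z)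
    by (field; lra).
  assert (0 <= (exp z * exp z - 2) / exp z)
    by (apply Rmult_le_pos; [lra | left; apply Rinv_0_lt_compat; lra]).
  lra.
Qed.

Lemma is_derive_cosh_affine c d x : is_derive (fun t => cosh (c * t + d)) x (c * sinh (c * x + d)).
Proof. unfold cosh, sinh. auto_derive; auto. field. Qed.

Lemma is_derive_sinh_affine c d x : is_derive (fun t => sinh (c * t + d)) x (c * cosh (c * x + d)).
Proof. unfold cosh, sinh. auto_derive; auto. field. Qed.

Lemma is_derive_eq (f : R -> R) (x d d' : R) : is_derive f x d -> d = d' -> is_derive f x d'.
Proof. intros H <-; auto. Qed.

Lemma is_derive_Rmult (f g : R -> R) (x df dg : R) : is_derive f x df -> is_derive g x dg ->
  is_derive (fun t => f t * g t) x (df * g x + f x * dg).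
Proof. intros. apply (is_derive_mult f g x df dg); auto. intros; apply Rmult_comm. Qed.

Lemma is_derive_Rplus (f g : R -> R) (x df dg : R) : is_derive f x df -> is_derive g x dg ->
  is_derive (fun t => f t + g t) x (df + dg).
Proof. intros. apply (is_derive_plus f g x df dg); auto. Qed.

Lemma is_derive_Rminus (f g : R -> R) (x df dg : R) : is_derive f x df -> is_derive g x dg ->
  is_derive (fun t => f t - g t) x (df - dg).
Proof. intros. apply (is_derive_minus f g x df dg); auto. Qed.

Lemma is_derive_Rscal (c : R) (f : R -> R) (x df : R) : is_derive f x df ->
  is_derive (fun t => c * f t) x (c * df).
Proof. intros. apply is_derive_scal; auto. Qed.

Lemma is_derive_Rdiv_const (c : R) (f : R -> R) (x df : R) : is_derive f x df ->
  is_derive (fun t => f t / c) x (df / c).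
Proof.
  intros H. apply (is_derive_ext (fun t => / c * f t)).
  - intros t. unfold Rdiv. apply Rmult_comm.
  - replace (df / c) with (/ c * df) by (unfold Rdiv; ring). apply is_derive_scal; auto.
Qed.

Lemma is_derive_continuity_pt (f : R -> R) (x l : R) : is_derive f x l -> continuity_pt f x.
Proof. intros H. apply continuity_pt_filterlim, (ex_derive_continuous f x). exists l; auto. Qed.

Lemma continuous_Rlin (f g : R -> R) (x c d : R) : continuous f x -> continuous g x ->
  continuous (fun t => c * f t + d * g t) x.
Proof.
  intros Hf Hg.
  apply (continuous_ext (fun t : R => @plus R_NormedModule (@scal R_AbsRing R_NormedModule c (f t))
                                                   (@scal R_AbsRing R_NormedModule d (g t)))).
  intros; reflexivity.
  apply (@continuous_plus R_UniformSpace R_AbsRing R_NormedModule);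
    apply (@continuous_scal_r R_UniformSpace R_AbsRing R_NormedModule); auto.
Qed.

Lemma RInt_Rlin (f g : R -> R) c d x y : ex_RInt f x y -> ex_RInt g x y ->
  RInt (fun t => c * f t + d * g t) x y = c * RInt f x y + d * RInt g x y.
Proof.
  intros Hf Hg.
  rewrite (RInt_ext _ (fun t => plus (scal c (f t)) (scal d (g t)))) by reflexivity.
  rewrite (@RInt_plus R_CompleteNormedModule), !(@RInt_scal R_CompleteNormedModule); auto;
    apply (@ex_RInt_scal R_CompleteNormedModule); auto.
Qed.

Lemma RInt_point_R (f : R -> R) b : RInt f b b = 0.
Proof. apply (@RInt_point R_CompleteNormedModule). Qed.

Lemma RInt_zero_R x y : RInt (fun _ => 0) x y = 0.
Proof.
  rewrite (@RInt_const R_CompleteNormedModule). apply (@scal_zero_r R_AbsRing R_NormedModule).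
Qed.

Lemma is_derive_zero_inside F t l lo hi : lo < t < hi -> (forall s, lo < s < hi -> F s = 0) ->
  is_derive F t l -> l = 0.
Proof.
  intros Ht HF HD.
  assert (H0 : is_derive F t 0).
  { apply (is_derive_ext_loc (fun _ => 0)).
    - assert (Hpos : 0 < Rmin (t - lo) (hi - t)) by (apply Rmin_pos; lra).
      exists (mkposreal _ Hpos). intros s Hs. assert (Hs' : Rabs (s - t) < Rmin (t - lo) (hi - t)) by apply Hs.
      generalize (Rmin_l (t - lo) (hi - t)) (Rmin_r (t - lo) (hi - t)). intros.
      symmetry. apply HF. Rabs_lra.
    - auto_derive; auto. }
  rewrite <- (is_derive_unique _ _ _ HD). apply is_derive_unique; auto.
Qed.

Lemma continuity_pt_zero_inside F t0 lo hi : lo < hi -> (t0 = lo \/ t0 = hi) ->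
  continuity_pt F t0 -> (forall s, lo < s < hi -> F s = 0) -> F t0 = 0.
Proof.
  intros Hlh Ht0 HC HF. destruct (Req_dec (F t0) 0) as [|Hn]; auto. exfalso.
  destruct (HC _ (Rabs_pos_lt _ Hn)) as [d [Hd K]].
  set (m := Rmin d (hi - lo) / 2).
  generalize (Rmin_l d (hi - lo)) (Rmin_r d (hi - lo)) (Rmin_pos d (hi - lo) Hd ltac:(lra)). intros.
  assert (Hs : exists s, lo < s < hi /\ s <> t0 /\ Rabs (s - t0) < d).
  { destruct Ht0 as [->| ->]; [exists (lo + m) | exists (hi - m)];
      unfold m; repeat split; try lra; apply Rabs_lt_between; lra. }
  destruct Hs as [s [Hs [Hne Hsd]]].
  specialize (K s (conj (conj I (not_eq_sym Hne)) Hsd)). simpl in K. unfold R_dist in K.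
  rewrite HF in K by auto. rewrite Rminus_0_l, Rabs_Ropp in K. lra.
Qed.

(* Energy argument: Q = P P' has Q' = P'^2 + k P^2 >= 0, Q(lo) = 0 and Q(hi) <= 0. *)
Lemma neumann_robin_unique (P H : R -> R) k lo hi : lo < hi -> 0 < k ->
  (forall t, lo < t < hi -> is_derive P t (H t)) ->
  (forall t, lo < t < hi -> is_derive H t (k * P t)) ->
  (forall t, continuity_pt P t) -> (forall t, continuity_pt H t) ->
  H lo = 0 -> P hi * H hi <= 0 -> forall t, lo <= t <= hi -> P t = 0.
Proof.
  intros Hlh Hk dP dH cP cH Hlo Hhi.
  set (Q := fun t => P t * H t).
  assert (dQ : forall t, lo < t < hi -> is_derive Q t (H t * H t + P t * (k * P t)))
    by (intros t Ht; apply is_derive_Rmult; auto).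
  assert (cQ : forall t, continuity_pt Q t) by (intros t; apply continuity_pt_mult; auto).
  assert (mono : forall s t, lo <= s -> s <= t -> t <= hi -> Q s <= Q t).
  { intros s t Hs Hst Ht. destruct (Req_dec s t) as [<-|Hne]. lra.
    destruct (MVT_gen Q s t (fun t => H t * H t + P t * (k * P t))) as [c [_ Heq]].
    - rewrite Rmin_left, Rmax_right by lra. intros x Hx. apply dQ. lra.
    - intros; apply cQ.
    - assert (0 <= H c * H c + P c * (k * P c)) by nra. nra. }
  assert (Qz : forall t, lo <= t <= hi -> Q t = 0).
  { intros t Ht. assert (Q lo <= Q t) by (apply mono; lra). assert (Q t <= Q hi) by (apply mono; lra).
    unfold Q in *. rewrite Hlo in *. lra. }
  assert (Pin : forall t, lo < t < hi -> P t = 0).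
  { intros t Ht. assert (E := is_derive_zero_inside Q t _ lo hi Ht (fun s Hs => Qz s ltac:(lra)) (dQ t Ht)).
    assert (0 <= H t * H t) by nra. assert (P t * P t = 0) by (apply (Rmult_eq_reg_l k); nra).
    nra. }
  intros t Ht. destruct (Req_dec t lo) as [->|]; [apply (continuity_pt_zero_inside P lo lo hi); auto|].
  destruct (Req_dec t hi) as [->|]; [apply (continuity_pt_zero_inside P hi lo hi); auto|].
  apply Pin; lra.
Qed.

Section ContinuousFunctions.
Variable a : R.

Lemma CU_ext f g : (forall u, f u = g u) -> CU a f -> CU a g.
Proof. intros H Hf. replace g with f; auto. apply functional_extensionality; auto. Qed.

Lemma CU_const c : CU a (fun _ => c).
Proof.
  intros x eps He. exists 1. split. lra.
  intros y _. rewrite Rminus_eq_0, Rabs_R0. lra.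
Qed.

Lemma CU_lin f g c d : CU a f -> CU a g -> CU a (fun u => c * f u + d * g u).
Proof.
  intros Hf Hg x eps He.
  assert (HK : 0 < Rabs c + Rabs d + 1) by (generalize (Rabs_pos c) (Rabs_pos d); lra).
  assert (He' : 0 < eps / 2 / (Rabs c + Rabs d + 1)) by (apply Rdiv_lt_0_compat; lra).
  destruct (Hf x _ He') as [d1 [Hd1 H1]]. destruct (Hg x _ He') as [d2 [Hd2 H2]].
  exists (Rmin d1 d2). split. apply Rmin_pos; lra.
  intros y Hy.
  assert (A1 := H1 y (Rlt_le_trans _ _ _ Hy (Rmin_l _ _))).
  assert (A2 := H2 y (Rlt_le_trans _ _ _ Hy (Rmin_r _ _))).
  replace (c * f (inl y) + d * g (inl y) - (c * f (inl x) + d * g (inl x))) with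
    (c * (f (inl y) - f (inl x)) + d * (g (inl y) - g (inl x))) by ring.
  apply (Rle_lt_trans _ (eps / 2)); [|lra].
  apply Rabs_lin_le; try lra; unfold Rdiv in *; lra.
Qed.

Lemma CU_sub f g : CU a f -> CU a g -> CU a (fun u => f u - g u).
Proof. intros. apply (CU_ext (fun u => 1 * f u + (-1) * g u)). intros; ring. apply CU_lin; auto. Qed.

Lemma CU_unif_limit f :
  (forall eps, 0 < eps -> exists h, CU a h /\ norm_le (fun u => f u - h u) eps) -> CU a f.
Proof.
  intros H x eps He.
  destruct (H (eps/3)) as [h [Hh Hfh]]. lra.
  destruct (Hh x (eps/3)) as [d [Hd Hd']]. lra.
  exists d. split; auto. intros y Hy. specialize (Hd' y Hy).
  generalize (Hfh (inl y)) (Hfh (inl x)). intros A1 A2.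
  apply Rabs_lt_between. split_Rabs. split; lra.
Qed.

End ContinuousFunctions.

Section Interval.
Variable a : R.
Hypothesis a_nonpos : a <= 0.

Definition clamp (x : R) : Iv a.
Proof.
  exists (Rmax a (Rmin x 0)). split. apply Rmax_l. apply Rmax_lub. lra. apply Rmin_r.
Defined.

Lemma Iv_eq (x y : Iv a) : proj1_sig x = proj1_sig y -> x = y.
Proof. destruct x as [x Hx], y as [y Hy]. simpl. intros ->. f_equal. apply proof_irrelevance. Qed.

Lemma clamp_val x : a <= x <= 0 -> proj1_sig (clamp x) = x.
Proof. intros [H1 H2]. simpl. rewrite Rmin_left by lra. rewrite Rmax_right; lra. Qed.

Lemma clamp_id (y : Iv a) : clamp (proj1_sig y) = y.
Proof. apply Iv_eq. apply clamp_val. apply (proj2_sig y). Qed.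

Lemma clamp_lip x y : Rabs (proj1_sig (clamp x) - proj1_sig (clamp y)) <= Rabs (x - y).
Proof. simpl. unfold Rmax, Rmin. repeat destruct Rle_dec; unfold Rabs; repeat destruct Rcase_abs; lra. Qed.

Lemma continuity_pt_clamp h : cont_Iv a h -> forall x, continuity_pt (fun y => h (clamp y)) x.
Proof.
  intros Hh x eps He. destruct (Hh (clamp x) eps He) as [d [Hd H]]. exists d. split; auto.
  intros y [_ Hy]. apply H. eapply Rle_lt_trans. apply clamp_lip. auto.
Qed.

Lemma continuous_clamp h x : cont_Iv a h -> continuous (fun y => h (clamp y)) x.
Proof. intros. apply continuity_pt_filterlim. apply continuity_pt_clamp; auto. Qed.

Lemma cont_Iv_of_R F : (forall x, a <= x <= 0 -> continuity_pt F x) ->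
  cont_Iv a (fun y => F (proj1_sig y)).
Proof.
  intros HF x eps He. destruct (HF (proj1_sig x) (proj2_sig x) eps He) as [d [Hd H]].
  exists d. split; auto. intros y Hy.
  destruct (Req_dec (proj1_sig y) (proj1_sig x)) as [E|E].
  - rewrite E, Rminus_eq_0, Rabs_R0. auto.
  - apply (H (proj1_sig y)). split. split. exact I. auto. auto.
Qed.

Lemma deriv_Iv_of_R F (x : Iv a) l : derivable_pt_lim F (proj1_sig x) l ->
  deriv_Iv a (fun y => F (proj1_sig y)) x l.
Proof.
  intros H eps He. destruct (H eps He) as [d Hd]. exists d. split. apply (cond_pos d).
  intros y Hne Hy. specialize (Hd (proj1_sig y - proj1_sig x)).
  replace (proj1_sig x + (proj1_sig y - proj1_sig x)) with (proj1_sig y) in Hd by ring.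
  apply Hd; auto. lra.
Qed.

Lemma deriv_Iv_to_R h x l : a < x < 0 -> deriv_Iv a h (clamp x) l ->
  derivable_pt_lim (fun y => h (clamp y)) x l.
Proof.
  intros Hx H eps He. destruct (H eps He) as [d [Hd Hd']].
  assert (Hpos : 0 < Rmin d (Rmin (x - a) (- x))) by (repeat apply Rmin_pos; lra).
  exists (mkposreal _ Hpos). intros k Hk0 Hk. simpl in Hk.
  generalize (Rmin_l d (Rmin (x - a) (-x))) (Rmin_r d (Rmin (x - a) (-x)))
    (Rmin_l (x - a) (-x)) (Rmin_r (x - a) (-x)). intros.
  assert (E1 : proj1_sig (clamp (x + k)) = x + k) by (apply clamp_val; split_Rabs; lra).
  assert (E2 : proj1_sig (clamp x) = x) by (apply clamp_val; lra).
  specialize (Hd' (clamp (x + k))). rewrite E1, E2 in Hd'.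
  replace (x + k - x) with k in Hd' by ring. apply Hd'; lra.
Qed.

Lemma deriv_Iv_cont h h' : (forall x, deriv_Iv a h x (h' x)) -> cont_Iv a h.
Proof.
  intros H x eps He. destruct (H x 1 Rlt_0_1) as [d [Hd Hd']].
  set (K := Rabs (h' x) + 1). assert (HK : 0 < K) by (unfold K; generalize (Rabs_pos (h' x)); lra).
  exists (Rmin d (eps / K)). split. apply Rmin_pos; auto. apply Rdiv_lt_0_compat; auto.
  intros y Hy. set (s := proj1_sig y - proj1_sig x).
  destruct (Req_dec (proj1_sig y) (proj1_sig x)) as [E|E].
  - rewrite (Iv_eq _ _ E), Rminus_eq_0, Rabs_R0. auto.
  - generalize (Rmin_l d (eps / K)) (Rmin_r d (eps / K)). intros.
    specialize (Hd' y E ltac:(lra)). fold s in Hd', Hy.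
    set (q := (h y - h x) / s) in *.
    assert (Eq : h y - h x = q * s) by (unfold q; field; unfold s; lra).
    rewrite Eq, Rabs_mult.
    assert (Hq : Rabs q <= K) by (unfold K; generalize (Rabs_triang_inv q (h' x)); lra).
    apply (Rle_lt_trans _ (K * Rabs s)). apply Rmult_le_compat_r; [apply Rabs_pos | lra].
    replace eps with (K * (eps / K)) by (field; lra). apply Rmult_lt_compat_l; lra.
Qed.

Definition extend (g : U a -> R) (y : R) : R := g (inl (clamp y)).

Lemma extend_val g (x : Iv a) : extend g (proj1_sig x) = g (inl x).
Proof. unfold extend. rewrite clamp_id. reflexivity. Qed.

Lemma extend_cont g x : CU a g -> continuous (extend g) x.
Proof. intros Hg. apply (continuous_clamp (fun y => g (inl y))). apply Hg. Qed.

Lemma CU_bounded f : CU a f -> exists B, norm_le f B.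
Proof.
  intros Hf. assert (Hc : forall c, a <= c <= 0 -> continuity_pt (extend f) c)
    by (intros c _; apply (continuity_pt_clamp (fun y => f (inl y))), Hf).
  destruct (continuity_ab_maj (extend f) a 0 a_nonpos Hc) as [Mx [HM _]].
  destruct (continuity_ab_min (extend f) a 0 a_nonpos Hc) as [mx [Hm _]].
  exists (Rabs (extend f Mx) + Rabs (extend f mx) + Rabs (f (inr tt))).
  intros [x|[]].
  - rewrite <- extend_val. assert (H1 := HM _ (proj2_sig x)). assert (H2 := Hm _ (proj2_sig x)).
    generalize (Rabs_pos (f (inr tt))). unfold Rabs. repeat destruct Rcase_abs; lra.
  - generalize (Rabs_pos (extend f Mx)) (Rabs_pos (extend f mx)). lra.
Qed.

Lemma deriv_Iv_lin h1 h2 x l1 l2 c d : deriv_Iv a h1 x l1 -> deriv_Iv a h2 x l2 ->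
  deriv_Iv a (fun y => c * h1 y + d * h2 y) x (c * l1 + d * l2).
Proof.
  intros D1 D2 eps He.
  assert (HK : 0 < Rabs c + Rabs d + 1) by (generalize (Rabs_pos c) (Rabs_pos d); lra).
  assert (He' : 0 < eps / 2 / (Rabs c + Rabs d + 1)) by (apply Rdiv_lt_0_compat; lra).
  destruct (D1 _ He') as [d1 [Hd1 K1]]. destruct (D2 _ He') as [d2 [Hd2 K2]].
  exists (Rmin d1 d2). split. apply Rmin_pos; auto. intros y Hne Hy.
  assert (A1 := K1 y Hne (Rlt_le_trans _ _ _ Hy (Rmin_l _ _))).
  assert (A2 := K2 y Hne (Rlt_le_trans _ _ _ Hy (Rmin_r _ _))).
  assert (Hn : proj1_sig y - proj1_sig x <> 0) by lra.
  replace ((c * h1 y + d * h2 y - (c * h1 x + d * h2 x)) / (proj1_sig y - proj1_sig x) - (c * l1 + d * l2))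
    with (c * ((h1 y - h1 x) / (proj1_sig y - proj1_sig x) - l1)
          + d * ((h2 y - h2 x) / (proj1_sig y - proj1_sig x) - l2)) by (field; auto).
  apply (Rle_lt_trans _ (eps / 2)); [apply Rabs_lin_le; lra | lra].
Qed.

Lemma cont_Iv_lin h1 h2 c d : cont_Iv a h1 -> cont_Iv a h2 -> cont_Iv a (fun y => c * h1 y + d * h2 y).
Proof.
  exact (CU_lin a (fun u => match u with inl x => h1 x | inr _ => 0 end)
                  (fun u => match u with inl x => h2 x | inr _ => 0 end) c d).
Qed.

End Interval.

(** * Semigroups from resolvents *)

Section EulerApproximation.
Variable a : R.
Hypothesis a_nonpos : a <= 0.
Notation X := (U a -> R).
(* J l stands for l (l - A)^-1 and G for the graph of A; T t f is the limit of the implicit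
   Euler scheme J N ^ floor (N t) f. *)
Variable J : R -> X -> X.
Variable G : X -> X -> Prop.
Hypothesis J_CU : forall l f, 0 < l -> CU a f -> CU a (J l f).
Hypothesis J_lin : forall l f g c d, 0 < l -> CU a f -> CU a g ->
  J l (fun u => c * f u + d * g u) = (fun u => c * J l f u + d * J l g u).
Hypothesis J_nonneg : forall l f, 0 < l -> CU a f -> (forall u, 0 <= f u) -> forall u, 0 <= J l f u.
Hypothesis J_one : forall l, 0 < l -> J l (fun _ => 1) = (fun _ => 1).
Hypothesis G_CU : forall f g, G f g -> CU a f /\ CU a g.
Hypothesis G_lin : forall f1 g1 f2 g2 c d, G f1 g1 -> G f2 g2 ->
  G (fun u => c * f1 u + d * f2 u) (fun u => c * g1 u + d * g2 u).
Hypothesis G_J : forall l f, 0 < l -> CU a f -> G (J l f) (fun u => l * (J l f u - f u)).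
Hypothesis J_G : forall l f g, 0 < l -> G f g -> J l f = (fun u => f u + / l * J l g u).
Hypothesis J_approx : forall f, CU a f -> forall eps, 0 < eps -> exists N0, (0 < N0)%nat /\
  forall N, (N0 <= N)%nat -> norm_le (fun u => J (INR N) f u - f u) eps.

Definition contraction (Y : X -> X) : Prop :=
  (forall f, CU a f -> CU a (Y f)) /\
  (forall f g c d, CU a f -> CU a g ->
     Y (fun u => c * f u + d * g u) = (fun u => c * Y f u + d * Y g u)) /\
  (forall f B, CU a f -> norm_le f B -> norm_le (Y f) B).

Definition commute_on_CU (Y Z : X -> X) := forall f, CU a f -> Y (Z f) = Z (Y f).

Lemma contraction_CU Y f : contraction Y -> CU a f -> CU a (Y f).
Proof. intros [H _]; auto. Qed.

Lemma contraction_norm Y f B : contraction Y -> CU a f -> norm_le f B -> norm_le (Y f) B.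
Proof. intros [_ [_ H]]; auto. Qed.

Lemma contraction_addsc Y f g c : contraction Y -> CU a f -> CU a g ->
  Y (fun u => f u + c * g u) = (fun u => Y f u + c * Y g u).
Proof.
  intros [_ [HL _]] Hf Hg.
  replace (fun u => f u + c * g u) with (fun u => 1 * f u + c * g u)
    by (apply functional_extensionality; intros; ring).
  rewrite HL by auto. apply functional_extensionality; intros; ring.
Qed.

Lemma contraction_sub Y f g u : contraction Y -> CU a f -> CU a g ->
  Y (fun u => f u - g u) u = Y f u - Y g u.
Proof.
  intros HY Hf Hg. replace (fun u => f u - g u) with (fun u => f u + (-1) * g u)
    by (apply functional_extensionality; intros; ring).
  rewrite contraction_addsc by auto. ring.
Qed.

Lemma contraction_sub_norm Y f g B : contraction Y -> CU a f -> CU a g ->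
  norm_le (fun u => f u - g u) B -> norm_le (fun u => Y f u - Y g u) B.
Proof.
  intros HY Hf Hg H u. rewrite <- contraction_sub by auto.
  apply (contraction_norm Y); auto. apply CU_sub; auto.
Qed.

Lemma J_const l c : 0 < l -> J l (fun _ => c) = (fun _ => c).
Proof.
  intros Hl. replace (fun _ : U a => c) with (fun _ : U a => c * 1 + 0 * 1)
    by (apply functional_extensionality; intros; ring).
  rewrite J_lin, J_one by (auto using CU_const). apply functional_extensionality; intros; ring.
Qed.

Lemma J_abs_le l phi psi : 0 < l -> CU a phi -> CU a psi -> (forall v, Rabs (phi v) <= psi v) ->
  forall u, Rabs (J l phi u) <= J l psi u.
Proof.
  intros Hl Cp Cq H u.
  assert (Hpos : forall s, (forall v, 0 <= psi v + s * phi v) -> 0 <= J l psi u + s * J l phi u).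
  { intros s Hs. replace (J l psi u + s * J l phi u) with (J l (fun v => 1 * psi v + s * phi v) u)
      by (rewrite J_lin by auto; ring).
    apply J_nonneg; auto using CU_lin. intros v. rewrite Rmult_1_l. auto. }
  assert (A1 := Hpos (-1) ltac:(intros v; specialize (H v); Rabs_lra)).
  assert (A2 := Hpos 1 ltac:(intros v; specialize (H v); Rabs_lra)).
  Rabs_lra.
Qed.

Lemma contraction_J l : 0 < l -> contraction (J l).
Proof.
  intros Hl. split; [|split]; auto.
  intros f B Hf HB u. replace B with (J l (fun _ => B) u) by (rewrite J_const; auto).
  apply J_abs_le; auto using CU_const.
Qed.

Lemma contraction_comp Y Z : contraction Y -> contraction Z -> contraction (fun h => Y (Z h)).
Proof.
  intros [Y1 [Y2 Y3]] [Z1 [Z2 Z3]]. split; [|split]; intros.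
  - auto.
  - rewrite Z2 by auto. auto.
  - auto.
Qed.

Lemma contraction_iter Y k : contraction Y -> contraction (Nat.iter k Y).
Proof.
  intros HY. induction k as [|k IH].
  - split; [|split]; simpl; auto.
  - exact (contraction_comp Y _ HY IH).
Qed.

Lemma commute_iter Y Z k : contraction Y -> commute_on_CU Y Z -> commute_on_CU (Nat.iter k Y) Z.
Proof.
  intros HY HC. induction k as [|k IH]; intros f Hf; simpl; auto.
  rewrite IH by auto. apply HC. apply (contraction_CU (Nat.iter k Y)); auto. apply contraction_iter; auto.
Qed.

(* Y^(j+1) h - Y^j h = Y^j (Y h - h) has norm at most B. *)
Lemma contraction_iter_drift Y h B k : contraction Y -> CU a h ->
  norm_le (fun u => Y h u - h u) B -> norm_le (fun u => Nat.iter k Y h u - h u) (INR k * B).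
Proof.
  intros HY Hh HB. assert (B0 := norm_le_nonneg _ _ (inr tt) HB).
  induction k as [|k IH]; intros u.
  - simpl. rewrite Rminus_eq_0, Rabs_R0. lra.
  - rewrite Nat.iter_succ_r.
    assert (H2 := contraction_sub_norm _ _ _ _ (contraction_iter Y k HY)
                    (contraction_CU _ _ HY Hh) Hh HB u).
    specialize (IH u). rewrite S_INR. Rabs_lra.
Qed.

Lemma contraction_iter_diff Y Z f B p : contraction Y -> contraction Z -> commute_on_CU Y Z ->
  CU a f -> norm_le (fun u => Y f u - Z f u) B ->
  norm_le (fun u => Nat.iter p Y f u - Nat.iter p Z f u) (INR p * B).
Proof.
  intros HY HZ HC Hf HB. assert (B0 := norm_le_nonneg _ _ (inr tt) HB).
  assert (GY := fun k => contraction_iter Y k HY). assert (GZ := fun k => contraction_iter Z k HZ).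
  induction p as [|p IH]; intros u.
  - simpl. rewrite Rminus_eq_0, Rabs_R0. lra.
  - assert (CY : CU a (Nat.iter p Y f)) by (apply (contraction_CU (Nat.iter p Y)); auto).
    assert (CZ : CU a (Nat.iter p Z f)) by (apply (contraction_CU (Nat.iter p Z)); auto).
    assert (E : Nat.iter (S p) Z f = Nat.iter p Z (Z f)) by apply Nat.iter_succ_r.
    assert (EY : Y (Nat.iter p Z f) = Nat.iter p Z (Y f))
      by (symmetry; apply (commute_iter Z Y p HZ); auto; intros g Hg; symmetry; auto).
    assert (H1 := contraction_sub_norm _ _ _ _ HY CY CZ IH u).
    assert (H2 := contraction_sub_norm _ _ _ _ (GZ p) (contraction_CU _ _ HY Hf)
                    (contraction_CU _ _ HZ Hf) HB u).
    rewrite <- EY, <- E in H2. simpl Nat.iter in *. rewrite S_INR. Rabs_lra.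
Qed.

(* By J_G, (l - m) J l (J m f) = l J m f - m J l f; swapping l and m flips the sign of both sides. *)
Lemma J_comm l m f : 0 < l -> 0 < m -> CU a f -> J l (J m f) = J m (J l f).
Proof.
  intros Hl Hm Hf. apply functional_extensionality. intros u.
  assert (E1 := J_G l _ _ Hl (G_J m f Hm Hf)).
  assert (E2 := J_G m _ _ Hm (G_J l f Hl Hf)).
  assert (L1 : J l (fun v => m * (J m f v - f v)) = fun v => m * J l (J m f) v + (-m) * J l f v).
  { rewrite <- J_lin by auto. f_equal. apply functional_extensionality; intros; ring. }
  assert (L2 : J m (fun v => l * (J l f v - f v)) = fun v => l * J m (J l f) v + (-l) * J m f v).
  { rewrite <- J_lin by auto. f_equal. apply functional_extensionality; intros; ring. }
  rewrite L1 in E1. rewrite L2 in E2.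
  apply (f_equal (fun h => h u)) in E1. apply (f_equal (fun h => h u)) in E2. simpl in E1, E2.
  destruct (Req_dec l m) as [<-|Hne]. reflexivity.
  apply (Rmult_eq_reg_l (l - m)); [|lra].
  set (A := J l (J m f) u) in *. set (B := J m (J l f) u) in *.
  set (P := J m f u) in *. set (Q := J l f u) in *.
  assert (F1 : l * A = l * P + m * A - m * Q) by (rewrite E1 at 1; field; lra).
  assert (F2 : m * B = m * Q + l * B - l * P) by (rewrite E2 at 1; field; lra).
  lra.
Qed.

Definition Jpow l k : X -> X := Nat.iter k (J l).
Definition euler (N : nat) (t : R) : X -> X := Jpow (INR N) (nfloor (INR N * t)).

Lemma contraction_Jpow l k : 0 < l -> contraction (Jpow l k).
Proof. intros; apply contraction_iter, contraction_J; auto. Qed.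

Lemma contraction_euler N t : (0 < N)%nat -> contraction (euler N t).
Proof. intros. apply contraction_Jpow, lt_0_INR; auto. Qed.

Lemma J_sub_id_dom l f g B : 0 < l -> G f g -> norm_le g B ->
  norm_le (fun u => J l f u - f u) (B / l).
Proof.
  intros Hl HG HB u. rewrite (J_G l f g Hl HG). destruct (G_CU _ _ HG) as [_ Cg].
  replace (f u + / l * J l g u - f u) with (/ l * J l g u) by ring.
  apply Rabs_div_pos; auto. apply (contraction_norm (J l)); auto using contraction_J.
Qed.

Lemma Jpow_sub_id_dom l k f g B : 0 < l -> G f g -> norm_le g B ->
  norm_le (fun u => Jpow l k f u - f u) (INR k * (B / l)).
Proof.
  intros Hl HG HB. apply contraction_iter_drift; auto using contraction_J.
  apply (G_CU f g HG). apply (J_sub_id_dom l f g); auto.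
Qed.

(* First-order expansion J_l^k f = f + (k/l) A f + error, where A f is only approximated
   within delta by an element phi of the domain. *)
Lemma Jpow_expansion l k f g phi psi delta C : 0 < l -> G f g -> G phi psi ->
  norm_le (fun u => g u - phi u) delta -> norm_le psi C ->
  norm_le (fun u => Jpow l k f u - f u - INR k / l * g u)
          (2 * delta * INR k / l + C * INR k ^ 2 / l ^ 2).
Proof.
  intros Hl Hfg Hpp Hd HC. destruct (G_CU _ _ Hfg) as [Cf Cg]. destruct (G_CU _ _ Hpp) as [Cphi _].
  assert (C0 := norm_le_nonneg _ _ (inr tt) HC). assert (d0 := norm_le_nonneg _ _ (inr tt) Hd).
  assert (Hl2 : 0 < l ^ 2) by (apply pow_lt; auto).
  induction k as [|k IH]; intros u.
  - simpl. replace (f u - f u - 0 / l * g u) with 0 by (field; lra). rewrite Rabs_R0.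
    right; field; lra.
  - assert (E : Jpow l (S k) f = fun v => Jpow l k f v + / l * Jpow l (S k) g v).
    { transitivity (Jpow l k (J l f)). apply Nat.iter_succ_r.
      rewrite (J_G l f g Hl Hfg), contraction_addsc by auto using contraction_Jpow.
      unfold Jpow. rewrite <- Nat.iter_succ_r. reflexivity. }
    rewrite E.
    assert (T1 := contraction_sub_norm _ _ _ _ (contraction_Jpow l (S k) Hl) Cg Cphi Hd u).
    assert (T2 := Jpow_sub_id_dom l (S k) phi psi C Hl Hpp HC u).
    assert (T3 := Hd u). specialize (IH u). cbv beta in *.
    set (D := Jpow l (S k) g u - g u).
    replace (Jpow l k f u + / l * Jpow l (S k) g u - f u - INR (S k) / l * g u)
      with ((Jpow l k f u - f u - INR k / l * g u) + / l * D) by (unfold D; rewrite S_INR; field; lra).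
    assert (A1 := Rabs_div_pos D l (2 * delta + INR (S k) * (C / l)) Hl ltac:(unfold D; Rabs_lra)).
    assert (A2 : 2 * delta * INR (S k) / l + C * INR (S k) ^ 2 / l ^ 2 -
       (2 * delta * INR k / l + C * INR k ^ 2 / l ^ 2 + (2 * delta + INR (S k) * (C / l)) / l)
       = C * INR k / l ^ 2) by (rewrite S_INR; field; lra).
    assert (A3 : 0 <= C * INR k / l ^ 2).
    { apply Rmult_le_pos. apply Rmult_le_pos; auto. apply pos_INR. left; apply Rinv_0_lt_compat; auto. }
    Rabs_lra.
Qed.

Lemma Jpow_expansion_dom2 l k f g g2 C : 0 < l -> G f g -> G g g2 -> norm_le g2 C ->
  norm_le (fun u => Jpow l k f u - f u - INR k / l * g u) (C * INR k ^ 2 / l ^ 2).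
Proof.
  intros Hl Hfg Hgg HC u.
  assert (H0 : norm_le (fun u => g u - g u) 0) by (intros v; rewrite Rminus_eq_0, Rabs_R0; lra).
  assert (A := Jpow_expansion l k f g g g2 0 C Hl Hfg Hgg H0 HC u).
  replace (2 * 0 * INR k / l) with 0 in A by (field; lra). lra.
Qed.

Lemma J_sub_Jpow l M f g g2 C : 0 < l -> (0 < M)%nat -> G f g -> G g g2 -> norm_le g2 C ->
  norm_le (fun u => J l f u - Jpow (INR M * l) M f u) (2 * C / l ^ 2).
Proof.
  intros Hl HM Hfg Hgg HC u. assert (Hm : 0 < INR M) by (apply lt_0_INR; auto).
  assert (H1 := Jpow_expansion_dom2 l 1 f g g2 C Hl Hfg Hgg HC u).
  assert (H2 := Jpow_expansion_dom2 (INR M * l) M f g g2 C ltac:(nra) Hfg Hgg HC u).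
  change (J l f u) with (Jpow l 1 f u). change (INR 1) with 1 in H1.
  replace (INR M / (INR M * l)) with (1 / l) in H2 by (field; lra).
  replace (C * INR M ^ 2 / (INR M * l) ^ 2) with (C / l ^ 2) in H2 by (field; lra).
  replace (C * 1 ^ 2 / l ^ 2) with (C / l ^ 2) in H1 by (field; lra).
  replace (2 * C / l ^ 2) with (C / l ^ 2 + C / l ^ 2) by (field; lra). Rabs_lra.
Qed.

(* The floor(N t) steps of J N are compared one by one with blocks of M steps of J (N M), which
   differ by O(1/N^2) (J_sub_Jpow); the fewer than M leftover fine steps cost O(1/N). *)
Lemma euler_refine N M t f g g2 C1 C2 : (0 < N)%nat -> (0 < M)%nat -> 0 <= t ->
  G f g -> G g g2 -> norm_le g C1 -> norm_le g2 C2 ->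
  norm_le (fun u => euler N t f u - euler (N * M) t f u) ((2 * t * C2 + C1) / INR N).
Proof.
  intros HN HM Ht Hfg Hgg Hg Hg2. destruct (G_CU _ _ Hfg) as [Cf _].
  assert (C10 := norm_le_nonneg _ _ (inr tt) Hg). assert (C20 := norm_le_nonneg _ _ (inr tt) Hg2).
  set (l := INR N). assert (Hl : 0 < l) by (apply lt_0_INR; auto).
  set (m := INR M). assert (Hm : 0 < m) by (apply lt_0_INR; auto).
  set (mu := INR (N * M)). assert (Hmu : mu = m * l) by (unfold mu, m, l; rewrite mult_INR; ring).
  assert (Hmu0 : 0 < mu) by (rewrite Hmu; apply Rmult_lt_0_compat; auto).
  destruct (nfloor_mul_decomp l t M Hl Ht HM) as [r [Hr Hq]].
  set (p := nfloor (l * t)) in Hq.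
  destruct (nfloor_spec (l * t) ltac:(apply Rmult_le_pos; lra)) as [Hp _]. fold p in Hp.
  unfold euler. fold l mu. replace (mu * t) with (m * l * t) by (rewrite Hmu; ring).
  fold m in Hq. rewrite Hq. fold p.
  set (Y := Jpow mu M). assert (GY : contraction Y) by (apply contraction_Jpow; auto).
  assert (E : Jpow mu (r + M * p) f = Nat.iter p Y (Jpow mu r f)).
  { unfold Jpow. rewrite Nat.add_comm, Nat.iter_add, iter_mul. reflexivity. }
  rewrite E.
  assert (B1 : norm_le (fun u => J l f u - Y f u) (2 * C2 / l ^ 2)).
  { unfold Y. rewrite Hmu. apply (J_sub_Jpow l M f g g2 C2); auto. }
  assert (CXY : commute_on_CU (J l) Y).
  { intros h Hh. symmetry. apply commute_iter; auto using contraction_J.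
    intros h' Hh'. apply J_comm; auto. }
  assert (P1 := contraction_iter_diff (J l) Y f _ p (contraction_J l Hl) GY CXY Cf B1).
  assert (P2 := contraction_sub_norm _ _ _ _ (contraction_iter Y p GY)
                  (contraction_CU _ _ (contraction_Jpow mu r Hmu0) Cf) Cf
                  (Jpow_sub_id_dom mu r f g C1 Hmu0 Hfg Hg)).
  assert (Hrm : INR r * (C1 / mu) <= C1 / l).
  { apply lt_INR in Hr. fold m in Hr. rewrite Hmu.
    replace (C1 / l) with (m * (C1 / (m * l))) by (field; lra).
    apply Rmult_le_compat_r; [|lra]. apply Rmult_le_pos; auto. left; apply Rinv_0_lt_compat; nra. }
  assert (Hpl : INR p * (2 * C2 / l ^ 2) <= 2 * t * C2 / l).
  { replace (2 * t * C2 / l) with ((l * t) * (2 * C2 / l ^ 2)) by (field; lra).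
    apply Rmult_le_compat_r; [|lra].
    apply Rmult_le_pos. lra. left; apply Rinv_0_lt_compat; apply pow_lt; lra. }
  intros u. specialize (P1 u). specialize (P2 u). cbv beta in P1, P2. unfold Jpow in *.
  replace ((2 * t * C2 + C1) / l) with (2 * t * C2 / l + C1 / l) by (field; lra).
  Rabs_lra.
Qed.

Lemma dom_dense f eps : CU a f -> 0 < eps ->
  exists phi psi, G phi psi /\ norm_le (fun u => f u - phi u) eps.
Proof.
  intros Hf He. destruct (J_approx f Hf eps He) as [K [HK HN]].
  exists (J (INR K) f), (fun u => INR K * (J (INR K) f u - f u)). split.
  apply G_J; auto. apply lt_0_INR; auto.
  intros u. rewrite Rabs_minus_sym. apply HN; auto.
Qed.

Lemma dom2_dense f eps : CU a f -> 0 < eps ->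
  exists phi psi psi2, G phi psi /\ G psi psi2 /\ norm_le (fun u => f u - phi u) eps.
Proof.
  intros Hf He. destruct (J_approx f Hf (eps/2)) as [N0 [HN0 HN]]. lra.
  set (K := INR N0). assert (HK : 0 < K) by (apply lt_0_INR; auto).
  set (f1 := J K f). assert (Cf1 : CU a f1) by (apply J_CU; auto).
  exists (J K f1), (fun u => K * (J K f1 u - f1 u)),
    (fun u => K * (K * (J K f1 u - f1 u)) + (- K) * (K * (f1 u - f u))).
  split; [|split].
  - apply G_J; auto.
  - replace (fun u => K * (J K f1 u - f1 u)) with (fun u => K * J K f1 u + (- K) * f1 u)
      by (apply functional_extensionality; intros; ring).
    apply G_lin; apply G_J; auto.
  - intros u. assert (A1 := HN N0 (le_n _) u).
    assert (A2 := contraction_sub_norm _ _ _ _ (contraction_J K HK) Cf1 Hf (HN N0 (le_n _)) u).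
    fold K f1 in A1, A2. Rabs_lra.
Qed.

Lemma euler_cauchy f t : CU a f -> 0 <= t -> forall eps, 0 < eps ->
  exists N0, (0 < N0)%nat /\ forall N M, (N0 <= N)%nat -> (N0 <= M)%nat ->
    norm_le (fun u => euler N t f u - euler M t f u) eps.
Proof.
  intros Hf Ht eps He.
  destruct (dom2_dense f (eps/4) Hf) as [phi [psi [psi2 [H1 [H2 H3]]]]]. lra.
  destruct (G_CU _ _ H1) as [Cphi Cpsi]. destruct (G_CU _ _ H2) as [_ Cpsi2].
  destruct (CU_bounded a a_nonpos psi Cpsi) as [C1 HC1].
  destruct (CU_bounded a a_nonpos psi2 Cpsi2) as [C2 HC2].
  assert (C10 := norm_le_nonneg _ _ (inr tt) HC1). assert (C20 := norm_le_nonneg _ _ (inr tt) HC2).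
  destruct (div_INR_le_eventually (2 * t * C2 + C1) (eps / 4)) as [N1 [HN1 HB]].
  { assert (0 <= t * C2) by (apply Rmult_le_pos; auto). lra. } lra.
  exists N1. split; auto. intros N M HN HM u.
  assert (HNp : (0 < N)%nat) by lia. assert (HMp : (0 < M)%nat) by lia.
  assert (A1 := euler_refine N M t phi psi psi2 C1 C2 HNp HMp Ht H1 H2 HC1 HC2 u).
  assert (A2 := euler_refine M N t phi psi psi2 C1 C2 HMp HNp Ht H1 H2 HC1 HC2 u).
  rewrite Nat.mul_comm in A2.
  assert (A3 := contraction_sub_norm _ _ _ _ (contraction_euler N t HNp) Hf Cphi H3 u).
  assert (A4 := contraction_sub_norm _ _ _ _ (contraction_euler M t HMp) Hf Cphi H3 u).
  assert (HB1 := HB N HN). assert (HB2 := HB M HM).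
  Rabs_lra.
Qed.

Definition T (t : R) (f : X) (u : U a) : R := real (Lim_seq (fun N => euler N t f u)).

Lemma euler_cvg f t : CU a f -> 0 <= t -> forall eps, 0 < eps ->
  exists N0, (0 < N0)%nat /\ forall N, (N0 <= N)%nat -> norm_le (fun u => euler N t f u - T t f u) eps.
Proof.
  intros Hf Ht eps He. destruct (euler_cauchy f t Hf Ht eps He) as [N0 [HN0 HC]].
  exists N0. split; auto. intros N HN u.
  apply (is_lim_seq_cauchy_bound (fun N => euler N t f u) _ N0); auto.
  - apply is_lim_seq_Lim_cauchy. intros e He'.
    destruct (euler_cauchy f t Hf Ht e He') as [N1 [_ HC1]].
    exists N1. intros n m Hn Hm. apply HC1; auto.
  - intros n m Hn Hm. apply HC; auto.
Qed.

Lemma T_le_of_euler f t h B C : CU a f -> 0 <= t -> 0 <= C ->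
  (forall N, (0 < N)%nat -> norm_le (fun u => euler N t f u - h u) (B + C / INR N)) ->
  norm_le (fun u => T t f u - h u) B.
Proof.
  intros Hf Ht HC H u. apply Rle_plus_epsilon. intros eps He.
  destruct (euler_cvg f t Hf Ht (eps/2)) as [N0 [HN0 HN]]. lra.
  destruct (div_INR_le_eventually C (eps/2) HC) as [N1 [HN1 HB]]. lra.
  set (N := Nat.max N0 N1).
  assert (A1 := HN N (Nat.le_max_l _ _) u).
  assert (A2 := H N ltac:(lia) u).
  assert (A3 := HB N (Nat.le_max_r _ _)).
  Rabs_lra.
Qed.

Lemma T_CU t f : 0 <= t -> CU a f -> CU a (T t f).
Proof.
  intros Ht Hf. apply CU_unif_limit. intros eps He.
  destruct (euler_cvg f t Hf Ht eps He) as [N0 [HN0 H]]. exists (euler N0 t f). split.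
  apply contraction_CU; auto using contraction_euler.
  intros u. rewrite Rabs_minus_sym. apply H; auto.
Qed.

Lemma T_lin t f g c d : 0 <= t -> CU a f -> CU a g ->
  T t (fun u => c * f u + d * g u) = (fun u => c * T t f u + d * T t g u).
Proof.
  intros Ht Hf Hg. apply functional_extensionality. intros u. unfold T at 1.
  apply Lim_seq_eq. intros eps He.
  assert (HK : 0 < eps / (Rabs c + Rabs d + 1))
    by (apply Rdiv_lt_0_compat; generalize (Rabs_pos c) (Rabs_pos d); lra).
  destruct (euler_cvg f t Hf Ht _ HK) as [N1 [HN1 H1]].
  destruct (euler_cvg g t Hg Ht _ HK) as [N2 [HN2 H2]].
  exists (Nat.max N1 N2). intros N HN.
  destruct (contraction_euler N t ltac:(lia)) as [_ [HL _]]. rewrite HL by auto.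
  assert (A1 := H1 N ltac:(lia) u). assert (A2 := H2 N ltac:(lia) u).
  replace (c * euler N t f u + d * euler N t g u - (c * T t f u + d * T t g u))
    with (c * (euler N t f u - T t f u) + d * (euler N t g u - T t g u)) by ring.
  apply Rabs_lin_le; auto.
Qed.

Lemma T_contraction t f B : 0 <= t -> CU a f -> norm_le f B -> norm_le (T t f) B.
Proof.
  intros Ht Hf HB u.
  assert (H : norm_le (fun u => T t f u - 0) B).
  { apply (T_le_of_euler f t (fun _ => 0) B 0 Hf Ht (Rle_refl 0)).
    intros N HN v. unfold Rdiv. rewrite Rmult_0_l, Rplus_0_r, Rminus_0_r.
    apply (contraction_norm (euler N t)); auto using contraction_euler. }
  specialize (H u). cbv beta in H. rewrite Rminus_0_r in H. auto.
Qed.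

Lemma T_0 f u : T 0 f u = f u.
Proof.
  apply Lim_seq_eq. intros eps He. exists 0%nat. intros n _.
  unfold euler. rewrite Rmult_0_r, nfloor_0. simpl. rewrite Rminus_eq_0, Rabs_R0. lra.
Qed.

Lemma T_nonneg t f : 0 <= t -> CU a f -> (forall u, 0 <= f u) -> forall u, 0 <= T t f u.
Proof.
  intros Ht Hf Hp u. apply Rle_plus_epsilon. intros eps He.
  destruct (euler_cvg f t Hf Ht eps He) as [N0 [HN0 H]].
  assert (A := H N0 (le_n _) u).
  assert (B : CU a (euler N0 t f) /\ forall v, 0 <= euler N0 t f v).
  { assert (Hl : 0 < INR N0) by (apply lt_0_INR; auto).
    apply (Nat.iter_invariant _ _ _ (fun h => CU a h /\ forall v, 0 <= h v)); [|auto].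
    intros h [Ch Hh]. auto. }
  specialize (proj2 B u). Rabs_lra.
Qed.

Lemma T_one t u : T t (fun _ => 1) u = 1.
Proof.
  apply Lim_seq_eq. intros eps He. exists 1%nat. intros n Hn.
  assert (E : euler n t (fun _ => 1) = fun _ => 1).
  { apply (Nat.iter_invariant _ _ _ (fun h => h = fun _ => 1)); auto.
    intros h ->. apply J_one, lt_0_INR; lia. }
  rewrite E, Rminus_eq_0, Rabs_R0. lra.
Qed.

Lemma T_add t s f : 0 <= t -> 0 <= s -> CU a f -> T (t + s) f = T t (T s f).
Proof.
  intros Ht Hs Hf. apply functional_extensionality. intros u.
  apply Lim_seq_eq. intros eps He.
  set (g := T s f). assert (Cg : CU a g) by (apply T_CU; auto).
  destruct (J_approx f Hf (eps/3)) as [N1 [HN1 H1]]. lra.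
  destruct (euler_cvg f s Hf Hs (eps/3)) as [N2 [HN2 H2]]. lra.
  destruct (euler_cvg g t Cg Ht (eps/3)) as [N3 [HN3 H3]]. lra.
  exists (Nat.max N1 (Nat.max N2 N3)). intros N HN.
  set (l := INR N). assert (Hl : 0 < l) by (apply lt_0_INR; lia).
  destruct (nfloor_add (l * t) (l * s)) as [e [He1 Hq]]; try (apply Rmult_le_pos; lra).
  assert (Ee : 0 <= INR e <= 1) by (split; [apply pos_INR | apply (le_INR e 1); auto]).
  set (p1 := nfloor (l * t)) in *. set (p2 := nfloor (l * s)) in *.
  assert (E : euler N (t + s) f = Jpow l p1 (Jpow l p2 (Jpow l e f))).
  { unfold euler. fold l. rewrite Rmult_plus_distr_l, Hq. unfold Jpow. rewrite !Nat.iter_add. auto. }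
  rewrite E.
  assert (G12 := contraction_comp _ _ (contraction_Jpow l p1 Hl) (contraction_Jpow l p2 Hl)).
  assert (Ce : CU a (Jpow l e f)) by (apply contraction_CU; auto using contraction_Jpow).
  assert (D1 := contraction_sub_norm _ _ _ _ G12 Ce Hf
                  (contraction_iter_drift (J l) f (eps/3) e (contraction_J l Hl) Hf (H1 N ltac:(lia))) u).
  assert (Cs : CU a (Jpow l p2 f)) by (apply contraction_CU; auto using contraction_Jpow).
  assert (D2 := contraction_sub_norm _ _ _ _ (contraction_Jpow l p1 Hl) Cs Cg (H2 N ltac:(lia)) u).
  assert (D3 := H3 N ltac:(lia) u).
  unfold euler in D2, D3. fold l p1 p2 in D2, D3. cbv beta in D1.
  assert (INR e * (eps / 3) <= eps / 3) by nra.
  Rabs_lra.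
Qed.

Lemma T_strong_cont f : CU a f -> forall eps, 0 < eps ->
  exists d, 0 < d /\ forall t, 0 <= t < d -> norm_le (fun u => T t f u - f u) eps.
Proof.
  intros Hf eps He.
  destruct (dom_dense f (eps/4) Hf) as [phi [psi [HG Hphi]]]. lra.
  destruct (G_CU _ _ HG) as [Cphi Cpsi]. destruct (CU_bounded a a_nonpos psi Cpsi) as [C HC].
  assert (C0 := norm_le_nonneg _ _ (inr tt) HC).
  exists (eps / (2 * (C + 1))). split. apply Rdiv_lt_0_compat; lra.
  intros t [Ht1 Ht2].
  assert (HtC := small_time_bound C eps t C0 He ltac:(lra)).
  intros u. apply (Rle_trans _ (eps / 4 + eps / 4 + t * C)); [| lra].
  revert u. apply (T_le_of_euler f t f _ 0 Hf Ht1 (Rle_refl 0)).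
  intros N HN u. replace (0 / INR N) with 0 by (unfold Rdiv; ring). rewrite Rplus_0_r.
  set (l := INR N). assert (Hl : 0 < l) by (apply lt_0_INR; auto).
  assert (A1 := contraction_sub_norm _ _ _ _ (contraction_euler N t HN) Hf Cphi Hphi u).
  assert (A2 := Jpow_sub_id_dom l (nfloor (l * t)) phi psi C Hl HG HC u).
  assert (A3 := Hphi u).
  destruct (nfloor_spec (l * t)) as [F1 _]. apply Rmult_le_pos; lra.
  assert (A4 : INR (nfloor (l * t)) * (C / l) <= t * C).
  { replace (t * C) with ((l * t) * (C / l)) by (field; lra). apply Rmult_le_compat_r; auto.
    apply Rmult_le_pos; auto. left; apply Rinv_0_lt_compat; auto. }
  unfold euler in A1 |- *. fold l in A1 |- *. cbv beta in *.
  Rabs_lra.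
Qed.

Lemma euler_expansion N h f g phi psi delta C Cg : (0 < N)%nat -> 0 <= h ->
  G f g -> G phi psi -> norm_le (fun u => g u - phi u) delta -> norm_le psi C -> norm_le g Cg ->
  norm_le (fun u => euler N h f u - (f u + h * g u)) (2 * delta * h + C * h ^ 2 + Cg / INR N).
Proof.
  intros HN Hh Hfg Hpp Hd HC HCg u.
  assert (C0 := norm_le_nonneg _ _ (inr tt) HC). assert (d0 := norm_le_nonneg _ _ (inr tt) Hd).
  set (l := INR N). assert (Hl : 0 < l) by (apply lt_0_INR; auto).
  destruct (nfloor_spec (l * h)) as [F1 F2]. apply Rmult_le_pos; lra.
  set (p := nfloor (l * h)) in *.
  assert (A1 := Jpow_expansion l p f g phi psi delta C Hl Hfg Hpp Hd HC u).
  assert (Hp1 : INR p / l <= h).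
  { apply (Rmult_le_reg_r l); auto. unfold Rdiv. rewrite Rmult_assoc, Rinv_l; lra. }
  assert (Hp2 : h - 1 / l < INR p / l).
  { apply (Rmult_lt_reg_r l); auto. unfold Rdiv. rewrite Rmult_assoc, Rinv_l by lra.
    replace ((h - 1 * / l) * l) with (l * h - 1) by (field; lra). lra. }
  assert (Hp0 : 0 <= INR p / l)
    by (apply Rmult_le_pos; [apply pos_INR | left; apply Rinv_0_lt_compat; auto]).
  assert (A2 : 2 * delta * INR p / l + C * INR p ^ 2 / l ^ 2 <= 2 * delta * h + C * h ^ 2).
  { replace (2 * delta * INR p / l + C * INR p ^ 2 / l ^ 2) with
      (2 * delta * (INR p / l) + C * (INR p / l) ^ 2) by (field; lra).
    assert ((INR p / l) ^ 2 <= h ^ 2) by (apply pow_incr; lra). nra. }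
  assert (A3 : Rabs ((INR p / l - h) * g u) <= Cg / l).
  { rewrite Rabs_mult. replace (Cg / l) with ((1 / l) * Cg) by (field; lra).
    apply Rmult_le_compat; try apply Rabs_pos. Rabs_lra. apply HCg. }
  unfold euler. fold l p.
  replace (Jpow l p f u - (f u + h * g u)) with
    ((Jpow l p f u - f u - INR p / l * g u) + (INR p / l - h) * g u) by ring.
  Rabs_lra.
Qed.

Lemma generator_of_dom f g : G f g -> gen_graph a T f g.
Proof.
  intros Hfg eps He. destruct (G_CU _ _ Hfg) as [Cf Cg].
  destruct (dom_dense g (eps/4) Cg) as [phi [psi [Hpp Hphi]]]. lra.
  destruct (G_CU _ _ Hpp) as [_ Cpsi].
  destruct (CU_bounded a a_nonpos psi Cpsi) as [C HC].
  destruct (CU_bounded a a_nonpos g Cg) as [Cg0 HCg].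
  assert (C0 := norm_le_nonneg _ _ (inr tt) HC). assert (Cg00 := norm_le_nonneg _ _ (inr tt) HCg).
  exists (eps / (2 * (C + 1))). split. apply Rdiv_lt_0_compat; lra.
  intros h [Hh1 Hh2].
  assert (HhC := small_time_bound C eps h C0 He ltac:(lra)).
  assert (B : norm_le (fun u => T h f u - (f u + h * g u)) (2 * (eps / 4) * h + C * h ^ 2)).
  { apply (T_le_of_euler f h _ _ Cg0 Cf ltac:(lra) Cg00). intros N HN.
    apply (euler_expansion N h f g phi psi); auto; lra. }
  intros u. specialize (B u). cbv beta in B.
  replace ((T h f u - f u) / h - g u) with (/ h * (T h f u - (f u + h * g u))) by (field; lra).
  apply (Rle_trans _ ((2 * (eps / 4) * h + C * h ^ 2) / h)). apply Rabs_div_pos; auto.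
  replace ((2 * (eps / 4) * h + C * h ^ 2) / h) with (eps / 2 + h * C) by (field; lra).
  lra.
Qed.

Lemma gen_graph_unique f g1 g2 : gen_graph a T f g1 -> gen_graph a T f g2 -> forall u, g1 u = g2 u.
Proof.
  intros H1 H2 u.
  assert (Habs : Rabs (g1 u - g2 u) <= 0).
  { apply Rle_plus_epsilon. intros eps He.
    destruct (H1 (eps/2)) as [d1 [Hd1 K1]]. lra. destruct (H2 (eps/2)) as [d2 [Hd2 K2]]. lra.
    set (h := Rmin d1 d2 / 2).
    generalize (Rmin_l d1 d2) (Rmin_r d1 d2) (Rmin_pos d1 d2 Hd1 Hd2). intros.
    specialize (K1 h ltac:(unfold h; lra) u). specialize (K2 h ltac:(unfold h; lra) u). Rabs_lra. }
  generalize (Rabs_pos (g1 u - g2 u)). intros. assert (E : Rabs (g1 u - g2 u) = 0) by lra.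
  apply Rabs_eq_0 in E. lra.
Qed.

Lemma T_J_comm l t f : 0 < l -> 0 <= t -> CU a f -> forall u, T t (J l f) u = J l (T t f) u.
Proof.
  intros Hl Ht Hf u. apply Lim_seq_eq. intros eps He.
  destruct (euler_cvg f t Hf Ht eps He) as [N0 [HN0 H]].
  exists N0. intros N HN. assert (HNp : (0 < N)%nat) by lia.
  assert (E : euler N t (J l f) = J l (euler N t f)).
  { apply (commute_iter (J (INR N)) (J l)); auto using contraction_J, lt_0_INR.
    intros h Hh. apply J_comm; auto using lt_0_INR. }
  rewrite E.
  apply (contraction_sub_norm _ _ _ _ (contraction_J l Hl)); auto using T_CU.
  apply contraction_CU; auto using contraction_euler.
Qed.

(* If T has derivative g at f, then J 1 f has derivative J 1 g, which must equal the known
   derivative J 1 f - f; hence f = J 1 (f - g) lies in the domain. *)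
Lemma dom_of_generator f g : CU a f -> CU a g -> gen_graph a T f g -> G f g.
Proof.
  intros Hf Hg Hgen.
  assert (H1 : gen_graph a T (J 1 f) (J 1 g)).
  { intros eps He. destruct (Hgen eps He) as [d [Hd K]]. exists d. split; auto.
    intros h Hh u. assert (CT : CU a (T h f)) by (apply T_CU; auto; lra).
    set (w := fun v => / h * (T h f v - f v) + (-1) * g v).
    assert (Cw : CU a w) by (apply CU_lin; auto; apply CU_sub; auto).
    assert (Hw : norm_le w eps).
    { intros v. specialize (K h Hh v). unfold w.
      replace (/ h * (T h f v - f v) + -1 * g v) with ((T h f v - f v) / h - g v) by (field; lra). auto. }
    assert (A := contraction_norm _ _ _ (contraction_J 1 Rlt_0_1) Cw Hw u).
    unfold w in A. rewrite J_lin in A by (auto; try lra; apply CU_sub; auto).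
    rewrite contraction_sub in A by (try apply contraction_J; auto; lra).
    rewrite <- T_J_comm in A by (auto; lra).
    replace ((T h (J 1 f) u - J 1 f u) / h - J 1 g u) with
      (/ h * (T h (J 1 f) u - J 1 f u) + -1 * J 1 g u) by (field; lra). auto. }
  assert (H2 : gen_graph a T (J 1 f) (fun u => 1 * (J 1 f u - f u)))
    by (apply generator_of_dom, G_J; auto; lra).
  assert (E := gen_graph_unique _ _ _ H1 H2).
  assert (Ef : J 1 (fun u => f u - g u) = f).
  { apply functional_extensionality; intros u.
    rewrite contraction_sub by (try apply contraction_J; auto; lra). rewrite E. ring. }
  assert (HG1 := G_J 1 (fun u => f u - g u) Rlt_0_1 (CU_sub _ _ _ Hf Hg)).
  rewrite Ef in HG1.
  replace g with (fun u => 1 * (f u - (f u - g u))); auto.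
  apply functional_extensionality; intros; ring.
Qed.

Theorem resolvent_generates_feller : exists T, conservative_Feller_semigroup a T /\
  (forall f g, CU a f -> CU a g -> (gen_graph a T f g <-> G f g)).
Proof.
  exists T. split; [split; [|split; [|split; [|split; [|split; [|split; [|split]]]]]]|].
  - intros; apply T_CU; auto.
  - intros t f g c d Ht Hf Hg u. rewrite T_lin; auto.
  - intros t Ht. exists 1. intros f B Hf HB u. rewrite Rmult_1_l. apply T_contraction; auto.
  - intros f _ u. apply T_0.
  - intros t s f Ht Hs Hf u. rewrite T_add; auto.
  - exact T_strong_cont.
  - exact T_nonneg.
  - intros; apply T_one.
  - intros f g Hf Hg. split; [apply dom_of_generator; auto | apply generator_of_dom].
Qed.

End EulerApproximation.

(** * The resolvent of A *)

Section Operator.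
Variables a kappa alpha beta : R.
Hypothesis a_neg : a < 0.
Hypothesis kappa_pos : 0 < kappa.
Hypothesis alpha_nonneg : 0 <= alpha.
Hypothesis beta_nonneg : 0 <= beta.

Let a_nonpos : a <= 0 := Rlt_le _ _ a_neg.
Local Notation cl := (clamp a a_nonpos).
Local Notation ext := (extend a a_nonpos).
Local Notation G := (graphA a kappa alpha beta).

Lemma graphA_CU f g : G f g -> CU a f /\ CU a g.
Proof.
  intros [Cf [h1 [h2 [_ [_ [Ch [_ [_ [_ Bi]]]]]]]]]. split; auto.
  apply (CU_ext a (fun u => match u with inl y => kappa * h2 y + 0 * h2 y | inr _ => g u end)).
  intros [y|[]]; auto. rewrite Bi; ring.
  apply (cont_Iv_lin a h2 h2); auto.
Qed.

Lemma graphA_lin f1 g1 f2 g2 c d : G f1 g1 -> G f2 g2 ->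
  G (fun u => c * f1 u + d * f2 u) (fun u => c * g1 u + d * g2 u).
Proof.
  intros [Cf1 [h1 [h2 [D1 [D2 [Ch [Ba [B0 [Bp Bi]]]]]]]]]
         [Cf2 [k1 [k2 [E1 [E2 [Ck [Ca [C0 [Cp Ci]]]]]]]]].
  split. apply CU_lin; auto.
  exists (fun x => c * h1 x + d * k1 x), (fun x => c * h2 x + d * k2 x).
  split; [|split; [|split; [|split; [|split; [|split]]]]].
  - intros x. apply (deriv_Iv_lin a (fun y => f1 (inl y)) (fun y => f2 (inl y))); auto.
  - intros x. apply deriv_Iv_lin; auto.
  - apply cont_Iv_lin; auto.
  - intros x Hx. rewrite Ba, Ca by auto. ring.
  - intros x Hx. rewrite B0, C0 by auto. ring.
  - intros x Hx. rewrite (Bp x Hx), (Cp x Hx). ring.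
  - intros x. rewrite Bi, Ci. ring.
Qed.

(* A C^2 function on R, restricted to [a,0-] and continued to 0+ by its value at 0, is in the
   domain when F' vanishes at a and 0: the condition at 0- then reads 0 = beta (F 0 - F 0). *)
Definition lift_R (F : R -> R) : U a -> R :=
  fun u => match u with inl x => F (proj1_sig x) | inr _ => F 0 end.
Definition A_lift (F2 : R -> R) : U a -> R :=
  fun u => match u with inl x => kappa * F2 (proj1_sig x) | inr _ => 0 end.

Lemma graphA_lift (F F1 F2 : R -> R) :
  (forall x, is_derive F x (F1 x)) -> (forall x, is_derive F1 x (F2 x)) ->
  (forall x, continuity_pt F2 x) -> F1 a = 0 -> F1 0 = 0 -> G (lift_R F) (A_lift F2).
Proof.
  intros D1 D2 C2 Ea E0. split.
  { apply (cont_Iv_of_R a). intros x _. apply (is_derive_continuity_pt _ _ (F1 x)); auto. }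
  exists (fun x => F1 (proj1_sig x)), (fun x => F2 (proj1_sig x)).
  split; [|split; [|split; [|split; [|split; [|split]]]]].
  - intros x. apply (deriv_Iv_of_R a F). apply is_derive_Reals. auto.
  - intros x. apply (deriv_Iv_of_R a F1). apply is_derive_Reals. auto.
  - apply (cont_Iv_of_R a F2). auto.
  - intros x Hx. simpl. rewrite Hx; auto.
  - intros x Hx. simpl. rewrite Hx, E0. ring.
  - intros x Hx. simpl. rewrite Hx. ring.
  - intros x. reflexivity.
Qed.

Lemma graphA_const c : G (fun _ => c) (fun _ => 0).
Proof.
  assert (H := graphA_lift (fun _ => c) (fun _ => 0) (fun _ => 0)).
  replace (lift_R (fun _ => c)) with (fun _ : U a => c) in H
    by (apply functional_extensionality; intros [|]; auto).
  replace (A_lift (fun _ => 0)) with (fun _ : U a => 0) in H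
    by (apply functional_extensionality; intros [|]; simpl; ring).
  apply H; try reflexivity.
  - intros x. auto_derive; auto.
  - intros x. auto_derive; auto.
  - intros x. apply continuity_pt_const. intros ? ?. reflexivity.
Qed.

Lemma graphA_resolvent_zero lam f g : 0 < lam -> G f g -> (forall u, lam * f u - g u = 0) ->
  forall u, f u = 0.
Proof.
  intros Hlam HG Hz. destruct HG as [Cf [h1 [h2 [D1 [D2 [_ [Ba [B0 [Bp Bi]]]]]]]]].
  assert (Hkp : 0 < lam / kappa) by (apply Rdiv_lt_0_compat; auto).
  assert (Hh2 : forall y, h2 y = lam / kappa * f (inl y)).
  { intros y. assert (A := Hz (inl y)). rewrite Bi in A. field_simplify; [|lra].
    apply (Rmult_eq_reg_l kappa); [field_simplify|]; lra. }
  assert (Hplus : f (inr tt) = alpha * ext f 0 / (lam + alpha)).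
  { assert (A1 := Bp (cl 0) ltac:(apply clamp_val; lra)). assert (A2 := Hz (inr tt)).
    unfold zplus in A1. apply (Rmult_eq_reg_l (lam + alpha)); [field_simplify|]; unfold extend; lra. }
  assert (Pzero : forall t, a <= t <= 0 -> ext f t = 0).
  { apply (neumann_robin_unique (ext f) (fun t => h1 (cl t)) (lam / kappa) a 0); auto.
    - intros t Ht. apply is_derive_Reals, (deriv_Iv_to_R a a_nonpos (fun y => f (inl y))); auto.
    - intros t Ht. apply is_derive_Reals. unfold extend. rewrite <- Hh2.
      apply (deriv_Iv_to_R a a_nonpos h1); auto.
    - apply (continuity_pt_clamp a a_nonpos (fun y => f (inl y))), Cf.
    - apply continuity_pt_clamp, (deriv_Iv_cont a h1 h2); auto.
    - apply Ba, clamp_val; lra.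
    - rewrite B0 by (apply clamp_val; lra). unfold zplus. rewrite Hplus.
      fold (ext f 0).
      replace (ext f 0 * (beta * (alpha * ext f 0 / (lam + alpha) - ext f 0)))
        with (- (beta * lam / (lam + alpha)) * (ext f 0 * ext f 0)) by (field; lra).
      assert (0 <= beta * lam / (lam + alpha))
        by (apply Rmult_le_pos; [apply Rmult_le_pos|left; apply Rinv_0_lt_compat]; lra).
      assert (0 <= ext f 0 * ext f 0) by nra. nra. }
  intros [x|[]].
  - rewrite <- (extend_val a a_nonpos). apply Pzero, (proj2_sig x).
  - rewrite Hplus, Pzero by lra. unfold Rdiv. ring.
Qed.

(* u1, u2 solve kappa u'' = lam u with u1'(a) = 0 and u2'(0) = - robin u2(0); the Robin
   coefficient comes from eliminating f(0+) = (g(0+) + alpha f(0-)) / (lam + alpha) from the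
   boundary condition at 0-. wronskian = u1' u2 - u1 u2'. *)
Definition freq lam := sqrt (lam / kappa).
Definition robin lam := beta * lam / (lam + alpha).
Definition u1 lam x := cosh (freq lam * (x - a)).
Definition u1' lam x := freq lam * sinh (freq lam * (x - a)).
Definition u2 lam x := cosh (freq lam * x) - robin lam / freq lam * sinh (freq lam * x).
Definition u2' lam x := freq lam * sinh (freq lam * x) - robin lam * cosh (freq lam * x).
Definition wronskian lam := freq lam * sinh (freq lam * (- a)) + robin lam * cosh (freq lam * (- a)).

Section Resolvent.
Variable lam : R.
Hypothesis lam_pos : 0 < lam.

Lemma freq_pos : 0 < freq lam.
Proof. apply sqrt_lt_R0, Rdiv_lt_0_compat; auto. Qed.

Lemma freq_sq : freq lam * freq lam = lam / kappa.
Proof. apply sqrt_sqrt. left; apply Rdiv_lt_0_compat; auto. Qed.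

Lemma robin_nonneg : 0 <= robin lam.
Proof. apply Rmult_le_pos. apply Rmult_le_pos; lra. left; apply Rinv_0_lt_compat; lra. Qed.

Lemma wronskian_pos : 0 < wronskian lam.
Proof.
  unfold wronskian. assert (H1 := freq_pos). assert (H2 := robin_nonneg).
  assert (H3 : 0 < sinh (freq lam * - a)) by (apply sinh_pos; nra).
  assert (H4 := cosh_pos (freq lam * - a)). nra.
Qed.

Lemma wronskian_eq x : u2' lam x * u1 lam x - u1' lam x * u2 lam x = - wronskian lam.
Proof.
  unfold u2', u1, u1', u2, wronskian, cosh, sinh.
  set (w := freq lam). set (b := robin lam). assert (Hom : 0 < w) by apply freq_pos.
  replace (w * (x - a)) with (w * x + - (w * a)) by ring.
  replace (w * - a) with (- (w * a)) by ring.
  rewrite !Ropp_plus_distr, !Ropp_involutive, !exp_plus, !exp_Ropp.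
  assert (exp (w * x) > 0) by apply exp_pos. assert (exp (w * a) > 0) by apply exp_pos.
  field. repeat split; lra.
Qed.

Lemma is_derive_u1 x : is_derive (u1 lam) x (u1' lam x).
Proof.
  apply (is_derive_ext (fun t => cosh (freq lam * t + - (freq lam * a)))).
  - intros t. unfold u1. f_equal. ring.
  - eapply is_derive_eq. apply is_derive_cosh_affine. unfold u1'. do 2 f_equal. ring.
Qed.

Lemma is_derive_u1' x : is_derive (u1' lam) x (freq lam * freq lam * u1 lam x).
Proof.
  apply (is_derive_ext (fun t => freq lam * sinh (freq lam * t + - (freq lam * a)))).
  - intros t. unfold u1'. do 2 f_equal. ring.
  - eapply is_derive_eq. apply is_derive_Rscal, is_derive_sinh_affine.
    unfold u1. replace (freq lam * x + - (freq lam * a)) with (freq lam * (x - a)) by ring. ring.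
Qed.

Lemma is_derive_u2 x : is_derive (u2 lam) x (u2' lam x).
Proof.
  assert (H := freq_pos).
  apply (is_derive_ext (fun t => cosh (freq lam * t + 0) - robin lam / freq lam * sinh (freq lam * t + 0))).
  - intros t. unfold u2. rewrite Rplus_0_r. reflexivity.
  - eapply is_derive_eq.
    apply is_derive_Rminus. apply is_derive_cosh_affine. apply is_derive_Rscal, is_derive_sinh_affine.
    unfold u2'. rewrite Rplus_0_r. field. lra.
Qed.

Lemma is_derive_u2' x : is_derive (u2' lam) x (freq lam * freq lam * u2 lam x).
Proof.
  assert (H := freq_pos).
  apply (is_derive_ext (fun t => freq lam * sinh (freq lam * t + 0) - robin lam * cosh (freq lam * t + 0))).
  - intros t. unfold u2'. rewrite !Rplus_0_r. reflexivity.
  - eapply is_derive_eq.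
    apply is_derive_Rminus; apply is_derive_Rscal. apply is_derive_sinh_affine. apply is_derive_cosh_affine.
    unfold u2. rewrite Rplus_0_r. field. lra.
Qed.

Lemma u1_cont x : continuous (u1 lam) x.
Proof. apply (ex_derive_continuous (u1 lam) x). eexists. apply is_derive_u1. Qed.

Lemma u2_cont x : continuous (u2 lam) x.
Proof. apply (ex_derive_continuous (u2 lam) x). eexists. apply is_derive_u2. Qed.

Lemma u2_nonneg x : x <= 0 -> 0 <= u2 lam x.
Proof.
  intros Hx. assert (Hom := freq_pos). assert (Hb := robin_nonneg). unfold u2.
  assert (sinh (freq lam * x) <= 0) by (apply sinh_nonpos; nra).
  assert (0 <= robin lam / freq lam) by (apply Rmult_le_pos; auto; left; apply Rinv_0_lt_compat; auto).
  assert (0 < cosh (freq lam * x)) by apply cosh_pos. nra.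
Qed.

Definition I1 (g : U a -> R) x := RInt (fun y => u1 lam y * ext g y) a x.
Definition I2 (g : U a -> R) x := RInt (fun y => u2 lam y * ext g y) x 0.
Definition jump_coef (g : U a -> R) := beta * g (zplus a) / ((lam + alpha) * wronskian lam).

(* Variation of constants with the Green kernel u1(min) u2(max) / (kappa W). *)
Definition green g x :=
  (u2 lam x * I1 g x + u1 lam x * I2 g x) / (kappa * wronskian lam) + jump_coef g * u1 lam x.
Definition green' g x :=
  (u2' lam x * I1 g x + u1' lam x * I2 g x) / (kappa * wronskian lam) + jump_coef g * u1' lam x.
Definition green'' g x :=
  (freq lam * freq lam * u2 lam x * I1 g x + freq lam * freq lam * u1 lam x * I2 g x +
   (u2' lam x * (u1 lam x * ext g x) + u1' lam x * (- (u2 lam x * ext g x)))) / (kappa * wronskian lam)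
   + jump_coef g * (freq lam * freq lam * u1 lam x).

Definition res (g : U a -> R) (u : U a) : R :=
  match u with
  | inl x => green g (proj1_sig x)
  | inr _ => (g (zplus a) + alpha * green g 0) / (lam + alpha)
  end.

Lemma ex_RInt_u1 g b c : CU a g -> ex_RInt (fun y => u1 lam y * ext g y) b c.
Proof.
  intros Hg. apply (@ex_RInt_continuous R_CompleteNormedModule). intros.
  apply (continuous_mult (u1 lam) (ext g)). apply u1_cont. apply extend_cont; auto.
Qed.

Lemma ex_RInt_u2 g b c : CU a g -> ex_RInt (fun y => u2 lam y * ext g y) b c.
Proof.
  intros Hg. apply (@ex_RInt_continuous R_CompleteNormedModule). intros.
  apply (continuous_mult (u2 lam) (ext g)). apply u2_cont. apply extend_cont; auto.
Qed.

Lemma is_derive_I1 g x : CU a g -> is_derive (I1 g) x (u1 lam x * ext g x).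
Proof.
  intros Hg. apply (is_derive_RInt (fun y => u1 lam y * ext g y) (I1 g) a x).
  - exists (mkposreal 1 Rlt_0_1). intros b _. apply (@RInt_correct R_CompleteNormedModule), ex_RInt_u1; auto.
  - apply (continuous_mult (u1 lam) (ext g)). apply u1_cont. apply extend_cont; auto.
Qed.

Lemma is_derive_I2 g x : CU a g -> is_derive (I2 g) x (- (u2 lam x * ext g x)).
Proof.
  intros Hg. apply (is_derive_ext (fun t => - RInt (fun y => u2 lam y * ext g y) 0 t)).
  - intros t. unfold I2. rewrite <- (opp_RInt_swap (fun y => u2 lam y * ext g y) 0 t); auto.
    apply ex_RInt_u2; auto.
  - apply (is_derive_opp (fun t => RInt (fun y => u2 lam y * ext g y) 0 t)).
    apply (is_derive_RInt (fun y => u2 lam y * ext g y) _ 0 x).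
    + exists (mkposreal 1 Rlt_0_1). intros b _.
      apply (@RInt_correct R_CompleteNormedModule), ex_RInt_u2; auto.
    + apply (continuous_mult (u2 lam) (ext g)). apply u2_cont. apply extend_cont; auto.
Qed.

Lemma is_derive_green g x : CU a g -> is_derive (green g) x (green' g x).
Proof.
  intros Hg. assert (HD := wronskian_pos).
  eapply is_derive_eq.
  - apply is_derive_Rplus. apply is_derive_Rdiv_const. apply is_derive_Rplus.
    apply is_derive_Rmult. apply is_derive_u2. apply is_derive_I1; auto.
    apply is_derive_Rmult. apply is_derive_u1. apply is_derive_I2; auto.
    apply is_derive_Rscal, is_derive_u1.
  - unfold green'. field. lra.
Qed.

Lemma is_derive_green' g x : CU a g -> is_derive (green' g) x (green'' g x).
Proof.
  intros Hg. assert (HD := wronskian_pos).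
  eapply is_derive_eq.
  - apply is_derive_Rplus. apply is_derive_Rdiv_const. apply is_derive_Rplus.
    apply is_derive_Rmult. apply is_derive_u2'. apply is_derive_I1; auto.
    apply is_derive_Rmult. apply is_derive_u1'. apply is_derive_I2; auto.
    apply is_derive_Rscal, is_derive_u1'.
  - unfold green''. field. lra.
Qed.

Lemma green_ode g x : kappa * green'' g x = lam * green g x - ext g x.
Proof.
  assert (HD := wronskian_pos). unfold green'', green.
  replace (u2' lam x * (u1 lam x * ext g x) + u1' lam x * - (u2 lam x * ext g x))
    with (- wronskian lam * ext g x) by (rewrite <- (wronskian_eq x); ring).
  rewrite freq_sq. field. lra.
Qed.

Lemma green''_cont g x : CU a g -> continuity_pt (green'' g) x.
Proof.
  intros Hg. apply continuity_pt_filterlim.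
  apply (continuous_ext (fun t => (lam / kappa) * green g t + (- / kappa) * ext g t)).
  - intros t. apply (Rmult_eq_reg_l kappa); [|lra]. rewrite green_ode. field. lra.
  - apply continuous_Rlin; [|apply extend_cont; auto].
    apply continuity_pt_filterlim, (is_derive_continuity_pt _ _ (green' g x)), is_derive_green; auto.
Qed.

Lemma graphA_res g : CU a g ->
  G (fun u => lam * res g u) (fun u => lam * (lam * res g u - g u)).
Proof.
  intros Hg. assert (HD := wronskian_pos). assert (Hom := freq_pos).
  assert (cont : forall F : R -> R, (forall x, continuity_pt F x) ->
                   cont_Iv a (fun y => lam * F (proj1_sig y))).
  { intros F HF. apply (cont_Iv_of_R a (fun t => lam * F t)). intros x _.
    apply continuity_pt_scal; auto. }
  split.
  { apply cont. intros x. apply (is_derive_continuity_pt _ _ (green' g x)), is_derive_green; auto. }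
  exists (fun x => lam * green' g (proj1_sig x)), (fun x => lam * green'' g (proj1_sig x)).
  split; [|split; [|split; [|split; [|split; [|split]]]]].
  - intros x. apply (deriv_Iv_of_R a (fun t => lam * green g t)), is_derive_Reals.
    apply is_derive_Rscal, is_derive_green; auto.
  - intros x. apply (deriv_Iv_of_R a (fun t => lam * green' g t)), is_derive_Reals.
    apply is_derive_Rscal, is_derive_green'; auto.
  - apply cont. intros; apply green''_cont; auto.
  - intros x Hx. rewrite Hx. unfold green', I1, u1'.
    rewrite RInt_point_R, Rminus_eq_0, !Rmult_0_r, sinh_0. field. lra.
  - intros x Hx. simpl. rewrite Hx. unfold green, green', I2. rewrite !RInt_point_R.
    unfold u2, u2', u1, u1'. rewrite Rmult_0_r, cosh_0, sinh_0. replace (0 - a) with (- a) by ring.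
    unfold jump_coef, wronskian, robin in *.
    assert (HS : 0 < sinh (freq lam * - a)) by (apply sinh_pos; nra).
    assert (HC := cosh_pos (freq lam * - a)).
    set (S := sinh (freq lam * - a)) in *. set (C := cosh (freq lam * - a)) in *.
    set (o := freq lam) in *.
    field. repeat split; try lra.
    assert (0 < o * S * (lam + alpha)) by (apply Rmult_lt_0_compat; [apply Rmult_lt_0_compat|]; lra).
    assert (0 <= beta * lam * C) by (apply Rmult_le_pos; [apply Rmult_le_pos|]; lra). lra.
  - intros x Hx. simpl. rewrite Hx. field. lra.
  - intros x. simpl. replace (kappa * (lam * green'' g (proj1_sig x)))
      with (lam * (kappa * green'' g (proj1_sig x))) by ring.
    rewrite green_ode, extend_val. ring.
Qed.

Lemma green_nonneg g x : CU a g -> (forall u, 0 <= g u) -> a <= x <= 0 -> 0 <= green g x.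
Proof.
  intros Hg Hp Hx. assert (HD := wronskian_pos).
  assert (A1 : 0 <= I1 g x).
  { apply RInt_ge_0. lra. apply ex_RInt_u1; auto. intros y _.
    apply Rmult_le_pos. left; apply cosh_pos. apply Hp. }
  assert (A2 : 0 <= I2 g x).
  { apply RInt_ge_0. lra. apply ex_RInt_u2; auto. intros y Hy.
    apply Rmult_le_pos. apply u2_nonneg; lra. apply Hp. }
  assert (A3 := u2_nonneg x ltac:(lra)). assert (A4 : 0 < u1 lam x) by apply cosh_pos.
  assert (A5 : 0 <= jump_coef g).
  { apply Rmult_le_pos. apply Rmult_le_pos; [lra | apply Hp].
    left; apply Rinv_0_lt_compat, Rmult_lt_0_compat; lra. }
  unfold green. apply Rplus_le_le_0_compat; [|nra].
  apply Rmult_le_pos; [nra|]. left; apply Rinv_0_lt_compat; nra.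
Qed.

Lemma res_nonneg g : CU a g -> (forall u, 0 <= g u) -> forall u, 0 <= res g u.
Proof.
  intros Hg Hp [x|[]]; simpl.
  - apply green_nonneg; auto. apply (proj2_sig x).
  - apply Rmult_le_pos; [|left; apply Rinv_0_lt_compat; lra].
    assert (0 <= green g 0) by (apply green_nonneg; auto; lra). generalize (Hp (zplus a)); nra.
Qed.

Lemma res_lin f g c d : CU a f -> CU a g ->
  res (fun u => c * f u + d * g u) = (fun u => c * res f u + d * res g u).
Proof.
  intros Hf Hg. apply functional_extensionality.
  assert (E1 : forall x, I1 (fun u => c * f u + d * g u) x = c * I1 f x + d * I1 g x).
  { intros x. unfold I1. rewrite <- RInt_Rlin by (apply ex_RInt_u1; auto).
    apply RInt_ext. intros y _. unfold extend. simpl. ring. }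
  assert (E2 : forall x, I2 (fun u => c * f u + d * g u) x = c * I2 f x + d * I2 g x).
  { intros x. unfold I2. rewrite <- RInt_Rlin by (apply ex_RInt_u2; auto).
    apply RInt_ext. intros y _. unfold extend. simpl. ring. }
  assert (E3 : forall x, green (fun u => c * f u + d * g u) x = c * green f x + d * green g x).
  { intros x. unfold green. rewrite E1, E2. unfold jump_coef. assert (HD := wronskian_pos).
    field. lra. }
  intros [x|[]]; simpl; rewrite E3; auto. field. lra.
Qed.

Lemma res_graphA f g : G f g -> res (fun u => lam * f u - g u) = f.
Proof.
  intros HG. destruct (graphA_CU f g HG) as [Cf Cg].
  set (h := fun u => lam * f u - g u).
  assert (Ch : CU a h) by (apply (CU_ext a (fun u => lam * f u + (-1) * g u));
                           [intros; unfold h; ring | apply CU_lin; auto]).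
  assert (Z := graphA_resolvent_zero lam _ _ lam_pos (graphA_lin _ _ _ _ 1 (- lam) (graphA_res h Ch) HG)).
  apply functional_extensionality. intros u.
  assert (A : 1 * (lam * res h u) + - lam * f u = 0) by (apply Z; intros v; unfold h; ring).
  apply (Rmult_eq_reg_l lam); lra.
Qed.

Lemma res_one : (fun u => lam * res (fun _ => 1) u) = (fun _ => 1).
Proof.
  assert (E := res_graphA _ _ (graphA_const (/ lam))). cbv beta in E.
  replace (fun _ : U a => lam * / lam - 0) with (fun _ : U a => 1) in E
    by (apply functional_extensionality; intros; field; lra).
  apply functional_extensionality. intros u. rewrite E. field. lra.
Qed.

Lemma res_of_graphA f g : G f g ->
  (fun u => lam * res f u) = (fun u => f u + / lam * (lam * res g u)).
Proof.
  intros HG. destruct (graphA_CU f g HG) as [Cf Cg].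
  assert (E := res_graphA f g HG).
  replace (fun u => lam * f u - g u) with (fun u => lam * f u + (-1) * g u) in E
    by (apply functional_extensionality; intros; ring).
  rewrite res_lin in E by auto.
  apply functional_extensionality. intros u.
  apply (f_equal (fun h => h u)) in E. simpl in E. rewrite <- E. field. lra.
Qed.

End Resolvent.

Definition Jres (l : R) (g : U a -> R) (u : U a) : R := l * res l g u.

Lemma Jres_CU l f : 0 < l -> CU a f -> CU a (Jres l f).
Proof. intros Hl Hf. apply (graphA_CU _ _ (graphA_res l Hl f Hf)). Qed.

Lemma Jres_lin l f g c d : 0 < l -> CU a f -> CU a g ->
  Jres l (fun u => c * f u + d * g u) = (fun u => c * Jres l f u + d * Jres l g u).
Proof.
  intros Hl Hf Hg. unfold Jres. rewrite res_lin by auto.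
  apply functional_extensionality; intros; ring.
Qed.

Lemma Jres_nonneg l f : 0 < l -> CU a f -> (forall u, 0 <= f u) -> forall u, 0 <= Jres l f u.
Proof. intros Hl Hf Hp u. apply Rmult_le_pos. lra. apply res_nonneg; auto. Qed.

Lemma Jres_one l : 0 < l -> Jres l (fun _ => 1) = (fun _ => 1).
Proof. intros Hl. exact (res_one l Hl). Qed.

Lemma graphA_Jres l f : 0 < l -> CU a f -> G (Jres l f) (fun u => l * (Jres l f u - f u)).
Proof. intros Hl Hf. exact (graphA_res l Hl f Hf). Qed.

Lemma Jres_graphA l f g : 0 < l -> G f g -> Jres l f = (fun u => f u + / l * Jres l g u).
Proof. intros Hl HG. exact (res_of_graphA l Hl f g HG). Qed.

Lemma Jres_contraction_norm l f B : 0 < l -> CU a f -> norm_le f B -> norm_le (Jres l f) B.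
Proof.
  intros Hl. apply contraction_norm, (contraction_J a Jres); auto.
  exact Jres_CU. exact Jres_lin. exact Jres_nonneg. exact Jres_one.
Qed.

(** * Convergence of l (l - A)^-1 to the identity *)

(* The cubic smoothstep in the rescaled variable (y - a) / (- a): it is increasing from 0 to 1
   on [a,0] with zero slope at both ends, so it and its square lie in the domain. *)
Definition rescale y := (y - a) / (- a).
Definition smooth y := 3 * rescale y ^ 2 - 2 * rescale y ^ 3.
Definition smooth' y := 6 * rescale y * (1 - rescale y) / (- a).
Definition smooth'' y := (6 - 12 * rescale y) / ((- a) * (- a)).
Definition smooth_sq y := smooth y * smooth y.
Definition smooth_sq'' y := 2 * (smooth' y * smooth' y + smooth y * smooth'' y).

Lemma is_derive_smooth x : is_derive smooth x (smooth' x).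
Proof. unfold smooth, smooth', rescale. auto_derive; auto. field. lra. Qed.

Lemma is_derive_smooth' x : is_derive smooth' x (smooth'' x).
Proof. unfold smooth', smooth'', rescale. auto_derive; auto. field. lra. Qed.

Lemma smooth''_cont x : continuity_pt smooth'' x.
Proof.
  apply (is_derive_continuity_pt _ _ (- 12 / ((- a) * (- a) * (- a)))).
  unfold smooth'', rescale. auto_derive; auto. field. lra.
Qed.

Lemma smooth'_ends : smooth' a = 0 /\ smooth' 0 = 0.
Proof.
  unfold smooth', rescale. rewrite Rminus_eq_0. replace ((0 - a) / - a) with 1 by (field; lra).
  split; unfold Rdiv; ring.
Qed.

Lemma graphA_smooth : G (lift_R smooth) (A_lift smooth'').
Proof.
  destruct smooth'_ends. apply (graphA_lift _ smooth'); auto using is_derive_smooth, is_derive_smooth', smooth''_cont.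
Qed.

Lemma graphA_smooth_sq : G (lift_R smooth_sq) (A_lift smooth_sq'').
Proof.
  destruct smooth'_ends as [Ea E0].
  apply (graphA_lift _ (fun y => 2 * (smooth y * smooth' y))).
  - intros x. eapply is_derive_eq. apply is_derive_Rmult; apply is_derive_smooth. ring.
  - intros x. eapply is_derive_eq. apply is_derive_Rscal, is_derive_Rmult.
    apply is_derive_smooth. apply is_derive_smooth'. unfold smooth_sq''. ring.
  - intros x. unfold smooth_sq''. apply continuity_pt_scal, continuity_pt_plus.
    + apply continuity_pt_mult; apply (is_derive_continuity_pt _ _ _ (is_derive_smooth' x)).
    + apply continuity_pt_mult; [apply (is_derive_continuity_pt _ _ _ (is_derive_smooth x))|].
      apply smooth''_cont.
  - rewrite Ea. ring.
  - rewrite E0. ring.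
Qed.

Lemma rescale_range y : a <= y <= 0 -> 0 <= rescale y <= 1.
Proof.
  intros Hy. assert (E : rescale y * (- a) = y - a) by (unfold rescale; field; lra). split; nra.
Qed.

Lemma smooth_range y : a <= y <= 0 -> 0 <= smooth y <= 1.
Proof.
  intros Hy. destruct (rescale_range y Hy). unfold smooth. set (t := rescale y) in *.
  assert (0 <= t ^ 2 * (3 - 2 * t)) by (apply Rmult_le_pos; [apply pow2_ge_0 | lra]).
  assert (0 <= (1 - t) ^ 2 * (1 + 2 * t)) by (apply Rmult_le_pos; [apply pow2_ge_0 | lra]).
  split; nra.
Qed.

Lemma smoothstep_sep s r d : 0 <= s -> r <= 1 -> 0 <= d -> s + d <= r ->
  d ^ 2 <= (3 * r ^ 2 - 2 * r ^ 3) - (3 * s ^ 2 - 2 * s ^ 3).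
Proof.
  intros Hs Hr Hd Hsr. set (D := r - s).
  replace ((3 * r ^ 2 - 2 * r ^ 3) - (3 * s ^ 2 - 2 * s ^ 3))
    with (D ^ 2 * (3 - 2 * D) + 6 * s * D * (1 - r)) by (unfold D; ring).
  assert (d ^ 2 <= D ^ 2) by (apply pow_incr; unfold D; lra).
  assert (D ^ 2 <= D ^ 2 * (3 - 2 * D)) by (assert (0 <= D ^ 2) by apply pow2_ge_0; unfold D in *; nra).
  assert (0 <= 6 * s * D * (1 - r)) by (apply Rmult_le_pos; [apply Rmult_le_pos|]; unfold D; lra).
  lra.
Qed.

Lemma smooth_sep x y dl : a <= x <= 0 -> a <= y <= 0 -> 0 < dl -> dl <= Rabs (y - x) ->
  (dl / (- a)) ^ 4 <= (smooth y - smooth x) ^ 2.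
Proof.
  intros Hx Hy Hd Hyx. set (d := dl / (- a)).
  assert (Hd0 : 0 <= d) by (unfold d; apply Rmult_le_pos; [lra | left; apply Rinv_0_lt_compat; lra]).
  assert (Ed : d * (- a) = dl) by (unfold d; field; lra).
  assert (key : forall s t, a <= s <= 0 -> a <= t <= 0 -> s + dl <= t ->
            (d ^ 2) ^ 2 <= (smooth t - smooth s) ^ 2).
  { intros s t Hs Ht Hst.
    assert (Es : rescale s * (- a) = s - a) by (unfold rescale; field; lra).
    assert (Et : rescale t * (- a) = t - a) by (unfold rescale; field; lra).
    destruct (rescale_range s Hs), (rescale_range t Ht).
    assert (rescale s + d <= rescale t) by nra.
    assert (A := smoothstep_sep (rescale s) (rescale t) d ltac:(lra) ltac:(lra) Hd0 ltac:(lra)).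
    apply pow_incr. split. apply pow2_ge_0. unfold smooth. lra. }
  replace (d ^ 4) with ((d ^ 2) ^ 2) by ring.
  destruct (Rle_lt_dec x y).
  - rewrite Rabs_right in Hyx by lra. apply key; auto; lra.
  - rewrite Rabs_left in Hyx by lra.
    replace ((smooth y - smooth x) ^ 2) with ((smooth x - smooth y) ^ 2) by ring.
    apply key; auto; lra.
Qed.

(* Uniform continuity for small |y - x|, and the bound 2M scaled by the separation of the
   smoothstep values otherwise. *)
Lemma extend_smooth_modulus g M eps : CU a g -> norm_le g M -> 0 < eps ->
  exists K, 0 <= K /\ forall x y, a <= x <= 0 -> a <= y <= 0 ->
    Rabs (ext g y - ext g x) <= eps + K * (smooth y - smooth x) ^ 2.
Proof.
  intros Hg HM He. assert (M0 := norm_le_nonneg _ _ (inr tt) HM).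
  assert (HU : uniform_continuity (ext g) (fun c => a <= c <= 0)).
  { apply Heine. apply compact_P3. intros x _.
    apply (continuity_pt_clamp a a_nonpos (fun y => g (inl y))), Hg. }
  destruct (HU (mkposreal eps He)) as [d0 Hd0]. simpl in Hd0.
  set (dl := Rmin d0 (- a)). assert (Hdl : 0 < dl) by (apply Rmin_pos; [apply (cond_pos d0) | lra]).
  set (eta := (dl / (- a)) ^ 4). assert (Heta : 0 < eta) by (apply pow_lt, Rdiv_lt_0_compat; lra).
  exists (2 * M / eta). split. apply Rmult_le_pos; [lra | left; apply Rinv_0_lt_compat; lra].
  intros x y Hx Hy.
  assert (Bx : Rabs (ext g x) <= M) by apply HM. assert (By : Rabs (ext g y) <= M) by apply HM.
  assert (Hsq : 0 <= (smooth y - smooth x) ^ 2) by apply pow2_ge_0.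
  assert (0 <= 2 * M / eta * (smooth y - smooth x) ^ 2)
    by (apply Rmult_le_pos; auto; apply Rmult_le_pos; [lra | left; apply Rinv_0_lt_compat; lra]).
  destruct (Rlt_le_dec (Rabs (y - x)) dl) as [Hlt|Hge].
  - assert (Rabs (ext g y - ext g x) < eps) by (apply Hd0; auto; generalize (Rmin_l d0 (-a)); fold dl; lra).
    lra.
  - assert (S := smooth_sep x y dl Hx Hy Hdl Hge). fold eta in S.
    assert (2 * M <= 2 * M / eta * (smooth y - smooth x) ^ 2).
    { replace (2 * M) with (2 * M / eta * eta) at 1 by (field; lra).
      apply Rmult_le_compat_l; auto. apply Rmult_le_pos; [lra | left; apply Rinv_0_lt_compat; lra]. }
    Rabs_lra.
Qed.

Lemma Jres_abs_le l phi psi : 0 < l -> CU a phi -> CU a psi -> (forall v, Rabs (phi v) <= psi v) ->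
  forall u, Rabs (Jres l phi u) <= Jres l psi u.
Proof. exact (J_abs_le a Jres Jres_lin Jres_nonneg l phi psi). Qed.

Lemma Jres_sub_id_dom l f g B : 0 < l -> G f g -> norm_le g B ->
  norm_le (fun u => Jres l f u - f u) (B / l).
Proof.
  exact (J_sub_id_dom a Jres G Jres_CU Jres_lin Jres_nonneg Jres_one graphA_CU Jres_graphA l f g B).
Qed.

Lemma freq_ge M l : 0 <= M -> 0 < l -> kappa * (M * M) <= l -> M <= freq l.
Proof.
  intros HM Hl H. unfold freq. rewrite <- (sqrt_Rsqr M HM). apply sqrt_le_1_alt. unfold Rsqr.
  apply (Rmult_le_reg_l kappa); [lra|]. replace (kappa * (l / kappa)) with l by (field; lra). lra.
Qed.

Definition ind_plus : U a -> R := fun u => match u with inl _ => 0 | inr _ => 1 end.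

(* The mass that the resolvent moves from the isolated point 0+ into [a,0-] is O(1 / freq l). *)
Lemma Jres_ind_plus_bound l (x : Iv a) : 0 < l -> 1 <= freq l * (- a) ->
  0 <= Jres l ind_plus (inl x) <= 3 * beta / freq l.
Proof.
  intros Hl Hom1. assert (HD := wronskian_pos l Hl). assert (Hom := freq_pos l Hl).
  assert (Hbb := robin_nonneg l Hl).
  assert (E1 : I1 l ind_plus (proj1_sig x) = 0).
  { unfold I1. rewrite (RInt_ext _ (fun _ => 0)). apply RInt_zero_R. intros; apply Rmult_0_r. }
  assert (E2 : I2 l ind_plus (proj1_sig x) = 0).
  { unfold I2. rewrite (RInt_ext _ (fun _ => 0)). apply RInt_zero_R. intros; apply Rmult_0_r. }
  unfold Jres, res, green. rewrite E1, E2. unfold jump_coef. simpl.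
  set (x0 := proj1_sig x). assert (Hx0 : a <= x0 <= 0) by apply (proj2_sig x).
  set (U1 := u1 l x0). set (S := sinh (freq l * - a)). set (C := cosh (freq l * - a)).
  assert (HU1 : 0 < U1) by apply cosh_pos.
  assert (HU1C : U1 <= C) by (apply cosh_le; nra).
  assert (HCS : C <= 3 * S) by (apply cosh_le_3sinh; lra).
  assert (HS : 0 < S) by (apply sinh_pos; nra).
  assert (HDS : freq l * S <= wronskian l)
    by (unfold wronskian; fold S C; assert (0 <= robin l * C) by (apply Rmult_le_pos; auto; left; apply cosh_pos); lra).
  replace (l * ((u2 l x0 * 0 + U1 * 0) / (kappa * wronskian l) + beta * 1 / ((l + alpha) * wronskian l) * U1))
    with (beta * (l / (l + alpha)) * (U1 / wronskian l)) by (field; lra).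
  assert (A1 : 0 <= l / (l + alpha) <= 1).
  { split. apply Rmult_le_pos; [lra | left; apply Rinv_0_lt_compat; lra].
    apply (Rmult_le_reg_r (l + alpha)). lra. unfold Rdiv. rewrite Rmult_assoc, Rinv_l by lra. lra. }
  assert (A2 : 0 <= U1 / wronskian l <= 3 / freq l).
  { split. apply Rmult_le_pos; [lra | left; apply Rinv_0_lt_compat; lra].
    apply (Rmult_le_reg_r (wronskian l * freq l)). nra. unfold Rdiv.
    replace (U1 * / wronskian l * (wronskian l * freq l)) with (U1 * freq l) by (field; lra).
    replace (3 * / freq l * (wronskian l * freq l)) with (3 * wronskian l) by (field; lra). nra. }
  split. apply Rmult_le_pos. apply Rmult_le_pos; lra. lra.
  replace (3 * beta / freq l) with (beta * 1 * (3 / freq l)) by (field; lra).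
  apply Rmult_le_compat. apply Rmult_le_pos; lra. lra. apply Rmult_le_compat_l; lra. lra.
Qed.

(* (smooth - p)^2 written as a combination of domain elements, so that its image under
   Jres l is within O(1/l) of its value 0 at a point where smooth = p. *)
Definition korovkin_test (p : R) : U a -> R := fun v =>
  1 * (1 * lift_R smooth_sq v + (-2 * p) * lift_R smooth v) + (p * p) * (fun _ : U a => 1) v.

Lemma CU_korovkin_test p : CU a (korovkin_test p).
Proof.
  assert (CP := proj1 (graphA_CU _ _ graphA_smooth)).
  assert (CQ := proj1 (graphA_CU _ _ graphA_smooth_sq)).
  apply CU_lin; [apply CU_lin; auto | apply CU_const].
Qed.

Lemma Jres_korovkin_test l BP BQ (x : Iv a) : 0 < l ->
  norm_le (A_lift smooth'') BP -> norm_le (A_lift smooth_sq'') BQ ->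
  Jres l (korovkin_test (smooth (proj1_sig x))) (inl x) <= (BQ + 2 * BP) / l.
Proof.
  intros Hl HBP HBQ.
  assert (CP := proj1 (graphA_CU _ _ graphA_smooth)).
  assert (CQ := proj1 (graphA_CU _ _ graphA_smooth_sq)).
  set (p := smooth (proj1_sig x)). assert (Hp := smooth_range _ (proj2_sig x)). fold p in Hp.
  unfold korovkin_test. rewrite Jres_lin, Jres_one, Jres_lin by (auto using CU_const; apply CU_lin; auto).
  assert (DP := Jres_sub_id_dom l _ _ BP Hl graphA_smooth HBP (inl x)).
  assert (DQ := Jres_sub_id_dom l _ _ BQ Hl graphA_smooth_sq HBQ (inl x)).
  simpl in DP, DQ. fold p in DP, DQ.
  set (JP := Jres l (lift_R smooth) (inl x)) in *. set (JQ := Jres l (lift_R smooth_sq) (inl x)) in *.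
  unfold smooth_sq in DQ. fold p in DQ.
  replace (1 * (1 * JQ + -2 * p * JP) + p * p * 1) with ((JQ - p * p) + (-2 * p) * (JP - p)) by ring.
  assert (Rabs (-2 * p) * Rabs (JP - p) <= 2 * (BP / l)).
  { apply Rmult_le_compat; try apply Rabs_pos; auto.
    rewrite Rabs_mult, Rabs_left, Rabs_right by lra. lra. }
  apply (Rle_trans _ _ _ (Rle_abs _)). eapply Rle_trans. apply Rabs_triang. rewrite Rabs_mult.
  replace ((BQ + 2 * BP) / l) with (BQ / l + 2 * (BP / l)) by (field; lra). lra.
Qed.

Lemma korovkin_dominance g M K eps (x : Iv a) : norm_le g M -> 0 <= K -> 0 <= eps ->
  (forall x y, a <= x <= 0 -> a <= y <= 0 ->
     Rabs (ext g y - ext g x) <= eps + K * (smooth y - smooth x) ^ 2) ->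
  forall v, Rabs (g v - g (inl x)) <=
    eps + K * korovkin_test (smooth (proj1_sig x)) v + 2 * M * ind_plus v.
Proof.
  intros HM HK He Hmod [y|[]]; unfold korovkin_test, lift_R, ind_plus, smooth_sq; simpl.
  - assert (A := Hmod (proj1_sig x) (proj1_sig y) (proj2_sig x) (proj2_sig y)).
    rewrite !(extend_val a a_nonpos) in A.
    replace (1 * (1 * (smooth (proj1_sig y) * smooth (proj1_sig y)) + -2 * smooth (proj1_sig x)
               * smooth (proj1_sig y)) + smooth (proj1_sig x) * smooth (proj1_sig x) * 1)
      with ((smooth (proj1_sig y) - smooth (proj1_sig x)) ^ 2) by ring. lra.
  - assert (A1 := HM (inr tt)). assert (A2 := HM (inl x)).
    set (p := smooth (proj1_sig x)).
    replace (1 * (1 * (smooth 0 * smooth 0) + -2 * p * smooth 0) + p * p * 1)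
      with ((smooth 0 - p) ^ 2) by ring.
    assert (0 <= K * (smooth 0 - p) ^ 2) by (apply Rmult_le_pos; auto; apply pow2_ge_0).
    Rabs_lra.
Qed.

Lemma Jres_interior_bound l g M K eps BP BQ (x : Iv a) : 0 < l -> 1 <= freq l * (- a) ->
  CU a g -> norm_le g M -> 0 <= K -> 0 <= eps ->
  (forall x y, a <= x <= 0 -> a <= y <= 0 ->
     Rabs (ext g y - ext g x) <= eps + K * (smooth y - smooth x) ^ 2) ->
  norm_le (A_lift smooth'') BP -> norm_le (A_lift smooth_sq'') BQ ->
  Rabs (Jres l g (inl x) - g (inl x)) <= eps + K * (BQ + 2 * BP) / l + 2 * M * (3 * beta / freq l).
Proof.
  intros Hl Hom1 Hg HM HK He Hmod HBP HBQ.
  assert (M0 := norm_le_nonneg _ _ (inr tt) HM).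
  set (c0 := g (inl x)). set (w := korovkin_test (smooth (proj1_sig x))).
  assert (Cw : CU a w) by apply CU_korovkin_test.
  assert (C1 := CU_const a 1). assert (Cind : CU a ind_plus) by apply (CU_const a 0).
  assert (Hdom : forall v, Rabs (1 * g v + - c0 * 1) <= 1 * (eps * 1 + K * w v) + 2 * M * ind_plus v).
  { intros v. assert (D := korovkin_dominance g M K eps x HM HK He Hmod v). fold c0 w in D.
    replace (1 * g v + - c0 * 1) with (g v - c0) by ring.
    replace (1 * (eps * 1 + K * w v) + 2 * M * ind_plus v)
      with (eps + K * w v + 2 * M * ind_plus v) by ring. exact D. }
  assert (A := Jres_abs_le l (fun v => 1 * g v + (- c0) * (fun _ : U a => 1) v)
                 (fun v => 1 * (eps * (fun _ : U a => 1) v + K * w v) + (2 * M) * ind_plus v)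
                 Hl ltac:(apply CU_lin; auto) ltac:(apply CU_lin; auto; apply CU_lin; auto)
                 Hdom (inl x)).
  rewrite !Jres_lin, !Jres_one in A by (auto; apply CU_lin; auto).
  assert (Hw := Jres_korovkin_test l BP BQ x Hl HBP HBQ). fold w in Hw.
  assert (E0 := Jres_ind_plus_bound l x Hl Hom1).
  assert (K * Jres l w (inl x) <= K * (BQ + 2 * BP) / l)
    by (unfold Rdiv; rewrite Rmult_assoc; apply Rmult_le_compat_l; auto).
  assert (2 * M * Jres l ind_plus (inl x) <= 2 * M * (3 * beta / freq l)) by (apply Rmult_le_compat_l; lra).
  replace (Jres l g (inl x) - c0) with (1 * Jres l g (inl x) + - c0 * 1) by ring.
  eapply Rle_trans. apply A. lra.
Qed.

Lemma Jres_isolated_bound l g M : 0 < l -> CU a g -> norm_le g M ->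
  Rabs (Jres l g (inr tt) - g (inr tt)) <= 2 * alpha * M / l.
Proof.
  intros Hl Hg HM.
  assert (A1 := HM (inr tt)).
  assert (A2 := Jres_contraction_norm l g M Hl Hg HM (inl (cl 0))).
  unfold Jres, res in A2 |- *. rewrite (clamp_val a a_nonpos 0) in A2 by lra.
  set (Y := l * green l g 0) in *. change (zplus a) with (@inr (Iv a) unit tt).
  set (gp := g (inr tt)) in *.
  replace (l * ((gp + alpha * green l g 0) / (l + alpha)) - gp) with (alpha * (Y - gp) / (l + alpha))
    by (unfold Y; field; lra).
  assert (HY : Rabs (Y - gp) <= 2 * M) by Rabs_lra.
  unfold Rdiv. rewrite !Rabs_mult, Rabs_inv, (Rabs_right alpha), (Rabs_right (l + alpha)) by lra.
  apply (Rle_trans _ (alpha * (2 * M) * / l)).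
  - apply Rmult_le_compat. apply Rmult_le_pos; [lra | apply Rabs_pos].
    left; apply Rinv_0_lt_compat; lra. apply Rmult_le_compat_l; lra. apply Rinv_le_contravar; lra.
  - right. field. lra.
Qed.

Lemma Jres_approx f : CU a f -> forall eps, 0 < eps -> exists N0, (0 < N0)%nat /\
  forall N, (N0 <= N)%nat -> norm_le (fun u => Jres (INR N) f u - f u) eps.
Proof.
  intros Hf eps He.
  destruct (CU_bounded a a_nonpos f Hf) as [M HM]. assert (M0 := norm_le_nonneg _ _ (inr tt) HM).
  destruct (extend_smooth_modulus f M (eps / 4) Hf HM ltac:(lra)) as [K [HK Hmod]].
  destruct (CU_bounded a a_nonpos _ (proj2 (graphA_CU _ _ graphA_smooth))) as [BP HBP].
  destruct (CU_bounded a a_nonpos _ (proj2 (graphA_CU _ _ graphA_smooth_sq))) as [BQ HBQ].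
  assert (BP0 := norm_le_nonneg _ _ (inr tt) HBP). assert (BQ0 := norm_le_nonneg _ _ (inr tt) HBQ).
  set (W := 1 / (- a) + 24 * M * beta / eps).
  assert (HW1 : 0 < 1 / (- a)) by (apply Rdiv_lt_0_compat; lra).
  assert (HW2 : 0 <= 24 * M * beta / eps)
    by (apply Rmult_le_pos; [apply Rmult_le_pos; lra | left; apply Rinv_0_lt_compat; lra]).
  destruct (div_INR_le_eventually (K * (BQ + 2 * BP)) (eps / 4)) as [N1 [HN1 HB1]];
    [apply Rmult_le_pos; lra | lra |].
  destruct (div_INR_le_eventually (2 * alpha * M) eps) as [N2 [HN2 HB2]];
    [apply Rmult_le_pos; lra | lra |].
  destruct (div_INR_le_eventually (kappa * (W * W)) 1) as [N3 [HN3 HB3]];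
    [apply Rmult_le_pos; [lra | unfold W; nra] | lra |].
  exists (Nat.max N1 (Nat.max N2 N3)). split. lia.
  intros N HN. set (l := INR N). assert (Hl : 0 < l) by (apply lt_0_INR; lia).
  assert (B1 := HB1 N ltac:(lia)). assert (B2 := HB2 N ltac:(lia)). assert (B3 := HB3 N ltac:(lia)).
  fold l in B1, B2, B3.
  assert (HW : W <= freq l).
  { apply freq_ge; auto. unfold W; lra.
    apply (Rmult_le_reg_r (/ l)). apply Rinv_0_lt_compat; lra. rewrite Rinv_r by lra. exact B3. }
  assert (Hom1 : 1 <= freq l * (- a)).
  { assert (1 / (- a) <= freq l) by (unfold W in HW; lra).
    apply (Rmult_le_compat_r (- a)) in H; [|lra]. replace (1 / - a * - a) with 1 in H by (field; lra). lra. }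
  assert (Hom2 : 2 * M * (3 * beta / freq l) <= eps / 4).
  { assert (Hom := freq_pos l Hl).
    assert (24 * M * beta / eps <= freq l) by (unfold W in HW; lra).
    replace (2 * M * (3 * beta / freq l)) with (6 * M * beta / freq l) by (field; lra).
    apply (Rmult_le_reg_r (freq l)); auto. unfold Rdiv at 1. rewrite Rmult_assoc, Rinv_l by lra.
    apply (Rmult_le_compat_l (eps / 4)) in H; [|lra].
    replace (eps / 4 * (24 * M * beta / eps)) with (6 * M * beta) in H by (field; lra). lra. }
  intros [x|[]].
  - assert (A := Jres_interior_bound l f M K (eps / 4) BP BQ x Hl Hom1 Hf HM HK ltac:(lra) Hmod HBP HBQ).
    unfold Rdiv in *. lra.
  - assert (A := Jres_isolated_bound l f M Hl Hf HM). lra.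
Qed.

Theorem operator_generates_feller : exists T, conservative_Feller_semigroup a T /\
  (forall f g, CU a f -> CU a g -> (gen_graph a T f g <-> G f g)).
Proof.
  exact (resolvent_generates_feller a a_nonpos Jres G Jres_CU Jres_lin Jres_nonneg Jres_one
           graphA_CU graphA_lin graphA_Jres Jres_graphA Jres_approx).
Qed.

End Operator.

Theorem lemma7p4 (a kappa alpha beta : R) :
  a < 0 -> 0 < kappa -> 0 <= alpha -> 0 <= beta ->
  exists T : R -> (U a -> R) -> (U a -> R),
    conservative_Feller_semigroup a T /\
    (forall f g : U a -> R, CU a f -> CU a g ->
       (gen_graph a T f g <-> graphA a kappa alpha beta f g)).
Proof. intros. apply operator_generates_feller; auto. Qed.
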